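(* For integers $a_1,a_2,D$ with $D\neq0$, $\varepsilon>0$ and $z$ in the complex upper half-plane, set \[\sigma_\varepsilon(z;a_1,a_2,D)=\sum_{\substack{(m,n)\in\mathbf{Z}^2\\ a_1+Dm\neq0}}\frac{1}{(z(a_1+Dm)+a_2+Dn)^2\,|z(a_1+Dm)+a_2+Dn|^{2\varepsilon}}.\] Then $\lim_{\mathrm{Im}(z)\to\infty}\lim_{\varepsilon\to0^+}\sigma_\varepsilon(z;a_1,a_2,D)=0$. *)

From Stdlib Require Import Reals ZArith.
From Coquelicot Require Import Coquelicot.
Open Scope R_scope.

Definition lat_pt (z : C) (a1 a2 D m n : Z) : C :=
  Cplus (Cmult z (RtoC (IZR (a1 + D * m)))) (RtoC (IZR (a2 + D * n))).

Definition sigma_term (eps : R) (z : C) (a1 a2 D m n : Z) : C :=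
  if Z.eq_dec (a1 + D * m) 0 then RtoC 0
  else let w := lat_pt z a1 a2 D m n in
       Cinv (Cmult (Cmult w w) (RtoC (Rpower (Cmod w) (2 * eps)))).

(* partial sum over the square -N <= m, n <= N *)
Definition sigma_partial (eps : R) (z : C) (a1 a2 D : Z) (N : nat) : C :=
  sum_n (fun i =>
    sum_n (fun j =>
      sigma_term eps z a1 a2 D (Z.of_nat i - Z.of_nat N)%Z
                                (Z.of_nat j - Z.of_nat N)%Z) (2 * N))
    (2 * N).

(* sigma_eps(z; a1, a2, D): sum over Z^2 (absolutely convergent for eps > 0),
   computed as the limit of the square partial sums, componentwise. *)
Definition sigma_eps (eps : R) (z : C) (a1 a2 D : Z) : C :=
  (real (Lim_seq (fun N => Re (sigma_partial eps z a1 a2 D N))),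
   real (Lim_seq (fun N => Im (sigma_partial eps z a1 a2 D N)))).

Definition Im_to_infty : (C -> Prop) -> Prop :=
  fun P => exists M : R, forall z : C, M < Im z -> P z.

(* Write [w = t + i Y] with [Y = y (a1 + D m)] and [t = x (a1 + D m) + a2 + D n], and replace
   [D] by [|D|] using the symmetry [(m, n) -> (-m, -n)]. Up to the factor [1 / (1 + s)] (and,
   for the real part, the extra term [s |w|^(-2-2s)]), the real and imaginary parts of the
   summand are [t]-derivatives of explicit functions of size [O(|w|^(-1-2s))]. Along each row
   the derivative is replaced by the difference quotient over the step [D]: the quotients
   telescope to boundary terms that vanish as the square grows, and the Taylor defects are
   bounded, uniformly for [0 <= s <= 1], by a summable majorant of total size [O(1/y)].
   Dominated convergence gives the limit of the defect sums as [s -> 0+], while the mass term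
   [s * sum |w|^(-2-2s)] tends to [pi / (D^2 y)], by comparing row sums with [arctan] and
   column sums with [u^(-2s)]. The inner limit is therefore [O(1/y)] as [Im z -> +oo]. *)

From Stdlib Require Import Reals ZArith Lra Lia.
From Coquelicot Require Import Coquelicot.
Open Scope R_scope.

(** * Symmetric sums over Z *)

Fixpoint zsum (N : nat) (f : Z -> R) : R :=
  match N with
  | O => f 0%Z
  | S k => zsum k f + f (Z.of_nat (S k)) + f (- Z.of_nat (S k))%Z
  end.

Lemma zsum_ext N f g :
  (forall k, (- Z.of_nat N <= k <= Z.of_nat N)%Z -> f k = g k) -> zsum N f = zsum N g.
Proof.
  induction N as [|N IH]; intros H; cbn [zsum].
  - apply H; lia.
  - rewrite IH by (intros; apply H; lia).
    rewrite (H (Z.of_nat (S N))), (H (- Z.of_nat (S N))%Z) by lia. reflexivity.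
Qed.

Lemma zsum_add N f g : zsum N (fun k => f k + g k) = zsum N f + zsum N g.
Proof. induction N; simpl; try rewrite IHN; ring. Qed.

Lemma zsum_scal N a f : zsum N (fun k => a * f k) = a * zsum N f.
Proof. induction N; simpl; try rewrite IHN; ring. Qed.

Lemma zsum_sub N f g : zsum N (fun k => f k - g k) = zsum N f - zsum N g.
Proof. induction N; simpl; try rewrite IHN; ring. Qed.

Lemma zsum_const N c : zsum N (fun _ => c) = (2 * INR N + 1) * c.
Proof. induction N; cbn [zsum]; [simpl; ring | rewrite IHN, S_INR; ring]. Qed.

Lemma zsum0 N : zsum N (fun _ => 0) = 0.
Proof. rewrite zsum_const; ring. Qed.

Lemma zsum_le N f g :
  (forall k, (- Z.of_nat N <= k <= Z.of_nat N)%Z -> f k <= g k) -> zsum N f <= zsum N g.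
Proof.
  induction N as [|N IH]; intros H; cbn [zsum].
  - apply H; lia.
  - assert (zsum N f <= zsum N g) by (apply IH; intros; apply H; lia).
    assert (f (Z.of_nat (S N)) <= g (Z.of_nat (S N))) by (apply H; lia).
    assert (f (- Z.of_nat (S N))%Z <= g (- Z.of_nat (S N))%Z) by (apply H; lia).
    lra.
Qed.

Lemma zsum_ge0 N f : (forall k, 0 <= f k) -> 0 <= zsum N f.
Proof. intros H. rewrite <- (zsum0 N). apply zsum_le. intros; apply H. Qed.

Lemma zsum_abs N f : Rabs (zsum N f) <= zsum N (fun k => Rabs (f k)).
Proof.
  induction N; cbn [zsum]; [lra|].
  eapply Rle_trans; [apply Rabs_triang|].
  eapply Rle_trans; [apply Rplus_le_compat_r, Rabs_triang | lra].
Qed.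

Lemma zsum_mono N M f : (forall k, 0 <= f k) -> (N <= M)%nat -> zsum N f <= zsum M f.
Proof.
  intros H HNM. induction HNM as [|M _ IH]; [lra|].
  cbn [zsum]. pose proof (H (Z.of_nat (S M))). pose proof (H (- Z.of_nat (S M))%Z). lra.
Qed.

Lemma zsum_reflect N f : zsum N f = zsum N (fun k => f (- k)%Z).
Proof.
  induction N; cbn [zsum]; [reflexivity|].
  rewrite IHN, Z.opp_involutive. ring.
Qed.

Lemma zsum_telescope N (H : Z -> R) :
  zsum N (fun k => H (k + 1)%Z - H k) = H (Z.of_nat N + 1)%Z - H (- Z.of_nat N)%Z.
Proof.
  induction N; cbn [zsum]; [simpl; ring|].
  rewrite IHN. replace (- Z.of_nat (S N) + 1)%Z with (- Z.of_nat N)%Z by lia.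
  replace (Z.of_nat (S N)) with (Z.of_nat N + 1)%Z by lia. ring.
Qed.

Lemma zsum_telescope_affine X d N (K : R -> R) :
  zsum N (fun n => K (X + d * IZR n + d) - K (X + d * IZR n)) =
  K (X + d * IZR (Z.of_nat N) + d) - K (X + d * IZR (- Z.of_nat N)).
Proof.
  transitivity (zsum N (fun k => K (X + d * IZR (k + 1)) - K (X + d * IZR k))).
  - apply zsum_ext. intros k _. rewrite plus_IZR. do 2 f_equal. simpl. ring.
  - rewrite (zsum_telescope N (fun k => K (X + d * IZR k))), plus_IZR.
    f_equal. f_equal. simpl. ring.
Qed.

Lemma zsum_telescope_affine_le X d N (K : R -> R) lo hi : (forall u, lo <= K u <= hi) ->
  zsum N (fun n => K (X + d * IZR n + d) - K (X + d * IZR n)) <= hi - lo.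
Proof.
  intros H. rewrite zsum_telescope_affine.
  pose proof (H (X + d * IZR (Z.of_nat N) + d)). pose proof (H (X + d * IZR (- Z.of_nat N))). lra.
Qed.

Lemma sum_n_centered (g : Z -> R) N :
  sum_n (fun i => g (Z.of_nat i - Z.of_nat N)%Z) (2 * N) = zsum N g.
Proof.
  revert g. induction N as [|N IH]; intros g.
  - simpl. rewrite sum_O. reflexivity.
  - replace (2 * S N)%nat with (S (S (2 * N))) by lia.
    rewrite !sum_n_Reals, tech5, decomp_sum by lia. cbn [zsum]. rewrite <- IH, sum_n_Reals.
    replace (Z.of_nat 0 - Z.of_nat (S N))%Z with (- Z.of_nat (S N))%Z by lia.
    replace (Z.of_nat (S (S (2 * N))) - Z.of_nat (S N))%Z with (Z.of_nat (S N)) by lia.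
    simpl pred. rewrite (sum_eq _ (fun i => g (Z.of_nat i - Z.of_nat N)%Z)).
    2:{ intros i _. f_equal. lia. }
    replace (N + (N + 0))%nat with (2 * N)%nat by lia. lra.
Qed.

Definition zsum2 N (F : Z -> Z -> R) := zsum N (fun m => zsum N (fun n => F m n)).

Lemma zsum2_ext N F G : (forall m n, F m n = G m n) -> zsum2 N F = zsum2 N G.
Proof. intros H. unfold zsum2. apply zsum_ext. intros. apply zsum_ext. intros. apply H. Qed.

Lemma zsum2_add N F G : zsum2 N (fun m n => F m n + G m n) = zsum2 N F + zsum2 N G.
Proof. unfold zsum2. rewrite <- zsum_add. apply zsum_ext. intros. apply zsum_add. Qed.

Lemma zsum2_scal N a F : zsum2 N (fun m n => a * F m n) = a * zsum2 N F.
Proof. unfold zsum2. rewrite <- zsum_scal. apply zsum_ext. intros. apply zsum_scal. Qed.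

Lemma zsum2_sub N F G : zsum2 N (fun m n => F m n - G m n) = zsum2 N F - zsum2 N G.
Proof. unfold zsum2. rewrite <- zsum_sub. apply zsum_ext. intros. apply zsum_sub. Qed.

Lemma zsum2_le N F G : (forall m n, F m n <= G m n) -> zsum2 N F <= zsum2 N G.
Proof. intros H. unfold zsum2. apply zsum_le. intros. apply zsum_le. intros. apply H. Qed.

Lemma zsum2_abs N F : Rabs (zsum2 N F) <= zsum2 N (fun m n => Rabs (F m n)).
Proof.
  unfold zsum2. eapply Rle_trans; [apply zsum_abs|]. apply zsum_le. intros. apply zsum_abs.
Qed.

Lemma zsum2_reflect N F : zsum2 N F = zsum2 N (fun m n => F (- m)%Z (- n)%Z).
Proof.
  unfold zsum2. rewrite zsum_reflect. apply zsum_ext. intros k _. rewrite zsum_reflect. reflexivity.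
Qed.

Definition zsum2_shell N (F : Z -> Z -> R) :=
  zsum N (fun n => F (Z.of_nat (S N)) n) + zsum N (fun n => F (- Z.of_nat (S N))%Z n)
  + zsum (S N) (fun m => F m (Z.of_nat (S N)) + F m (- Z.of_nat (S N))%Z).

Lemma zsum2_S N F : zsum2 (S N) F = zsum2 N F + zsum2_shell N F.
Proof.
  unfold zsum2, zsum2_shell.
  rewrite (zsum_ext (S N) (fun m => zsum (S N) (fun n => F m n))
     (fun m => zsum N (fun n => F m n) + (F m (Z.of_nat (S N)) + F m (- Z.of_nat (S N))%Z))).
  2:{ intros k _. cbn [zsum]. ring. }
  rewrite zsum_add. cbn [zsum]. ring.
Qed.

Lemma zsum2_shell_abs N a b :
  (forall m n, Rabs (a m n) <= b m n) -> Rabs (zsum2_shell N a) <= zsum2_shell N b.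
Proof.
  intros H. unfold zsum2_shell.
  eapply Rle_trans; [apply Rabs_triang|].
  eapply Rle_trans; [apply Rplus_le_compat_r, Rabs_triang|].
  repeat apply Rplus_le_compat; eapply Rle_trans; try apply zsum_abs; apply zsum_le; intros; auto.
  eapply Rle_trans; [apply Rabs_triang | apply Rplus_le_compat; auto].
Qed.

Global Instance at_right_filter (x : R) : Filter (at_right x) :=
  @filter_filter _ _ (at_right_proper_filter x).

Section FilterlimR.

Context {T : Type} (F : (T -> Prop) -> Prop) {FF : Filter F}.

Lemma filterlim_Rplus (f g : T -> R) a b :
  filterlim f F (locally a) -> filterlim g F (locally b) ->
  filterlim (fun s => f s + g s) F (locally (a + b)).
Proof.
  intros Hf Hg. eapply filterlim_comp_2; [exact Hf | exact Hg |].
  apply (filterlim_plus (K := R_AbsRing) (V := R_NormedModule) a b).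
Qed.

Lemma filterlim_Rmult (f g : T -> R) a b :
  filterlim f F (locally a) -> filterlim g F (locally b) ->
  filterlim (fun s => f s * g s) F (locally (a * b)).
Proof.
  intros Hf Hg. eapply filterlim_comp_2; [exact Hf | exact Hg | apply (filterlim_mult a b)].
Qed.

Lemma filterlim_Ropp (f : T -> R) a :
  filterlim f F (locally a) -> filterlim (fun s => - f s) F (locally (- a)).
Proof. intros Hf. eapply filterlim_comp; [exact Hf | apply (filterlim_opp a)]. Qed.

Lemma filterlim_Rminus (f g : T -> R) a b :
  filterlim f F (locally a) -> filterlim g F (locally b) ->
  filterlim (fun s => f s - g s) F (locally (a - b)).
Proof. intros Hf Hg. apply filterlim_Rplus; [exact Hf | apply filterlim_Ropp, Hg]. Qed.

Lemma filterlim_locally_Rabs (f : T -> R) (y : R) :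
  filterlim f F (locally y) <-> (forall eps, 0 < eps -> F (fun x => Rabs (f x - y) < eps)).
Proof.
  rewrite filterlim_locally. split.
  - intros H eps He. exact (H (mkposreal eps He)).
  - intros H eps. exact (H eps (cond_pos eps)).
Qed.

Lemma filterlim_zsum N (f : T -> Z -> R) (g : Z -> R) :
  (forall k, filterlim (fun s => f s k) F (locally (g k))) ->
  filterlim (fun s => zsum N (f s)) F (locally (zsum N g)).
Proof.
  intros H. induction N; cbn [zsum]; [apply H|].
  repeat apply filterlim_Rplus; auto.
Qed.

Lemma filterlim_zsum2 N (f : T -> Z -> Z -> R) g :
  (forall m n, filterlim (fun s => f s m n) F (locally (g m n))) ->
  filterlim (fun s => zsum2 N (f s)) F (locally (zsum2 N g)).
Proof. intros H. apply filterlim_zsum. intros m. apply filterlim_zsum; auto. Qed.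

Lemma filterlim_pair (f : T -> C) (a b : R) :
  filterlim (fun s => fst (f s)) F (locally a) -> filterlim (fun s => snd (f s)) F (locally b) ->
  filterlim f F (locally (a, b)).
Proof.
  intros H1 H2. apply filterlim_locally. intros eps.
  rewrite filterlim_locally in H1, H2.
  eapply filter_imp; [|apply filter_and; [exact (H1 eps) | exact (H2 eps)]].
  intros s [Hs1 Hs2]. split; auto.
Qed.

End FilterlimR.

Lemma at_right_0_interval (P : R -> Prop) (e : R) :
  0 < e -> (forall s, 0 < s < e -> P s) -> at_right 0 P.
Proof.
  intros He H. exists (mkposreal e He). intros u Hu Hpos. apply H.
  assert (Hu' : Rabs (u - 0) < e) by exact Hu. rewrite Rminus_0_r, Rabs_right in Hu'; lra.
Qed.

Lemma filterlim_id_at_right : filterlim (fun s : R => s) (at_right 0) (locally 0).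
Proof. intros P [e He]. exists e. intros u Hu _. apply He, Hu. Qed.

Lemma filterlim_at_right_continuous (f : R -> R) :
  ex_derive f 0 -> filterlim f (at_right 0) (locally (f 0)).
Proof.
  intros Hd P HP.
  destruct (ex_derive_continuous (K := R_AbsRing) (V := R_NormedModule) _ _ Hd P HP) as [e He].
  exists e. intros u Hu _. apply He, Hu.
Qed.

Lemma filterlim_inv_1_plus : filterlim (fun s => / (1 + s)) (at_right 0) (locally 1).
Proof.
  assert (H := filterlim_at_right_continuous (fun s => / (1 + s)) ltac:(auto_derive; lra)).
  simpl in H. rewrite Rplus_0_r, Rinv_1 in H. exact H.
Qed.

Lemma filterlim_at_right_gt (f : R -> R) (a c : R) :
  filterlim f (at_right 0) (locally a) -> c < a -> at_right 0 (fun s => c < f s).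
Proof.
  intros H Hc.
  eapply filter_imp; [|exact (proj1 (filterlim_locally_Rabs _ f a) H (a - c) ltac:(lra))].
  intros s Hs. apply Rabs_lt_between in Hs. lra.
Qed.

Lemma filterlim_at_right_lt (f : R -> R) (a c : R) :
  filterlim f (at_right 0) (locally a) -> a < c -> at_right 0 (fun s => f s < c).
Proof.
  intros H Hc.
  eapply filter_imp; [|exact (proj1 (filterlim_locally_Rabs _ f a) H (c - a) ltac:(lra))].
  intros s Hs. apply Rabs_lt_between in Hs. lra.
Qed.

(** The value of [Lim_seq], read as a real number ([0] when the limit is infinite). *)
Definition lim_real (u : nat -> R) : R := real (Lim_seq u).

Lemma is_lim_seq_lim_real u : ex_finite_lim_seq u -> is_lim_seq u (lim_real u).
Proof.
  intros [l Hl]. unfold lim_real. rewrite (is_lim_seq_unique _ _ Hl). exact Hl.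
Qed.

Lemma lim_real_unique u (l : R) : is_lim_seq u l -> lim_real u = l.
Proof. intros H. unfold lim_real. rewrite (is_lim_seq_unique _ _ H). reflexivity. Qed.

Lemma is_lim_seq_le_R u v (l1 l2 : R) :
  (forall n, u n <= v n) -> is_lim_seq u l1 -> is_lim_seq v l2 -> l1 <= l2.
Proof. intros H H1 H2. exact (is_lim_seq_le u v l1 l2 H H1 H2). Qed.

Lemma is_lim_seq_le_eventually u v (l1 l2 : R) N0 :
  (forall n, (N0 <= n)%nat -> u n <= v n) -> is_lim_seq u l1 -> is_lim_seq v l2 -> l1 <= l2.
Proof.
  intros H H1 H2.
  apply (is_lim_seq_le_R (fun n => u (n + N0)%nat) (fun n => v (n + N0)%nat)).
  - intros; apply H; lia.
  - exact (proj1 (is_lim_seq_incr_n u N0 l1) H1).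
  - exact (proj1 (is_lim_seq_incr_n v N0 l2) H2).
Qed.

Lemma is_lim_seq_ge_eventually (u : nat -> R) (l b : R) : is_lim_seq u l ->
  (forall eta, 0 < eta -> exists N0, forall N, (N0 <= N)%nat -> b - eta <= u N) -> b <= l.
Proof.
  intros Hl H. apply Rle_plus_epsilon. intros eta Heta.
  destruct (H eta Heta) as [N0 HN0].
  cut (b - eta <= l); [lra|].
  exact (is_lim_seq_le_eventually (fun _ => b - eta) u _ _ N0 HN0 (is_lim_seq_const _) Hl).
Qed.

Lemma ex_lim_seq_dominated_increments (u v : nat -> R) B :
  (forall N, Rabs (u (S N) - u N) <= v (S N) - v N) -> (forall N, v N <= B) ->
  ex_finite_lim_seq v /\ ex_finite_lim_seq u /\
  (forall N, v N <= lim_real v) /\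
  (forall N, Rabs (lim_real u - u N) <= lim_real v - v N).
Proof.
  intros Hd HB.
  assert (Hinc : forall N, v N <= v (S N)).
  { intros N. pose proof (Hd N). pose proof (Rabs_pos (u (S N) - u N)). lra. }
  assert (Hv : ex_finite_lim_seq v) by exact (ex_finite_lim_seq_incr v B Hinc HB).
  assert (Hdiff : forall N M, (N <= M)%nat -> Rabs (u M - u N) <= v M - v N).
  { intros N M HNM. induction HNM as [|M _ IH].
    - replace (u N - u N) with 0 by ring. rewrite Rabs_R0. lra.
    - replace (u (S M) - u N) with ((u (S M) - u M) + (u M - u N)) by ring.
      eapply Rle_trans; [apply Rabs_triang|]. pose proof (Hd M). lra. }
  assert (Hlv := is_lim_seq_lim_real v Hv).
  assert (HvL : forall N, v N <= lim_real v).
  { intros N.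
    apply (is_lim_seq_le_eventually (fun _ => v N) v _ _ N); [|apply is_lim_seq_const|exact Hlv].
    intros n Hn. pose proof (Hdiff N n Hn). pose proof (Rabs_pos (u n - u N)). lra. }
  assert (Hu : ex_finite_lim_seq u).
  { apply ex_lim_seq_cauchy_corr. intros eps.
    destruct (proj1 (ex_lim_seq_cauchy_corr v) Hv eps) as [N0 HN0]. exists N0. intros n m Hn Hm.
    destruct (Nat.le_ge_cases n m) as [Hnm|Hnm].
    - rewrite Rabs_minus_sym. eapply Rle_lt_trans; [apply Hdiff, Hnm|].
      specialize (HN0 m n Hm Hn). pose proof (Rle_abs (v m - v n)). lra.
    - eapply Rle_lt_trans; [apply Hdiff, Hnm|].
      specialize (HN0 n m Hn Hm). pose proof (Rle_abs (v n - v m)). lra. }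
  assert (Hlu := is_lim_seq_lim_real u Hu).
  repeat split; auto.
  intros N. apply Rabs_le. split.
  - cut (v N - lim_real v + u N <= lim_real u); [lra|].
    apply (is_lim_seq_le_eventually (fun M => v N - v M + u N) u _ _ N); [|eauto with * |exact Hlu].
    + intros M HM. pose proof (Hdiff N M HM) as H. apply Rabs_le_between in H. lra.
    + apply is_lim_seq_plus'; [apply is_lim_seq_minus'|]; auto using is_lim_seq_const.
  - cut (lim_real u <= lim_real v - v N + u N); [lra|].
    apply (is_lim_seq_le_eventually u (fun M => v M - v N + u N) _ _ N); [|exact Hlu|].
    + intros M HM. pose proof (Hdiff N M HM) as H. apply Rabs_le_between in H. lra.
    + apply is_lim_seq_plus'; [apply is_lim_seq_minus'|]; auto using is_lim_seq_const.
Qed.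

Lemma zsum2_dominated a b B :
  (forall m n, Rabs (a m n) <= b m n) -> (forall N, zsum2 N b <= B) ->
  ex_finite_lim_seq (fun N => zsum2 N b) /\ ex_finite_lim_seq (fun N => zsum2 N a) /\
  (forall N, zsum2 N b <= lim_real (fun N => zsum2 N b)) /\
  (forall N, Rabs (lim_real (fun N => zsum2 N a) - zsum2 N a)
             <= lim_real (fun N => zsum2 N b) - zsum2 N b).
Proof.
  intros H HB. apply ex_lim_seq_dominated_increments with B; auto.
  intros N. rewrite !zsum2_S.
  replace (zsum2 N a + zsum2_shell N a - zsum2 N a) with (zsum2_shell N a) by ring.
  replace (zsum2 N b + zsum2_shell N b - zsum2 N b) with (zsum2_shell N b) by ring.
  apply zsum2_shell_abs; auto.
Qed.

Lemma zsum2_dominated_convergence {T} (F : (T -> Prop) -> Prop) {FF : Filter F}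
    (a : T -> Z -> Z -> R) a0 b B :
  F (fun s => forall m n, Rabs (a s m n) <= b m n) ->
  (forall m n, Rabs (a0 m n) <= b m n) ->
  (forall N, zsum2 N b <= B) ->
  (forall m n, filterlim (fun s => a s m n) F (locally (a0 m n))) ->
  filterlim (fun s => lim_real (fun N => zsum2 N (a s))) F
            (locally (lim_real (fun N => zsum2 N a0))).
Proof.
  intros Hev H0 HB Hlim.
  apply (proj2 (filterlim_locally_Rabs F _ _)). intros eps He.
  destruct (zsum2_dominated a0 b B H0 HB) as [Hb [_ [HbL Ha0L]]].
  assert (Hlb := is_lim_seq_lim_real _ Hb).
  destruct (Hlb (fun r => Rabs (r - lim_real (fun N => zsum2 N b)) < eps / 3)) as [N0 HN0].
  { exists (mkposreal (eps / 3) ltac:(lra)). intros r Hr. exact Hr. }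
  specialize (HN0 N0 (le_n _)).
  assert (HF := proj1 (filterlim_locally_Rabs _ _ _) (filterlim_zsum2 F N0 a a0 Hlim)
                  (eps / 3) ltac:(lra)).
  eapply filter_imp; [| apply filter_and; [exact Hev | exact HF]].
  intros s [Hs1 Hs2].
  destruct (zsum2_dominated (a s) b B Hs1 HB) as [_ [_ [_ HaL]]].
  specialize (HaL N0). specialize (Ha0L N0). specialize (HbL N0).
  rewrite Rabs_minus_sym, Rabs_right in HN0 by lra.
  replace (lim_real (fun N => zsum2 N (a s)) - lim_real (fun N => zsum2 N a0)) with
    ((lim_real (fun N => zsum2 N (a s)) - zsum2 N0 (a s)) + (zsum2 N0 (a s) - zsum2 N0 a0)
     - (lim_real (fun N => zsum2 N a0) - zsum2 N0 a0)) by ring.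
  eapply Rle_lt_trans; [apply Rabs_triang|].
  eapply Rle_lt_trans; [apply Rplus_le_compat_r, Rabs_triang|].
  rewrite Rabs_Ropp. lra.
Qed.

Lemma Rpower_pos x y : 0 < Rpower x y.
Proof. apply exp_pos. Qed.

Lemma Rpower_le_nonpos a b q : 0 < a <= b -> q <= 0 -> Rpower b q <= Rpower a q.
Proof.
  intros Hab Hq. replace q with (- (- q)) by ring.
  rewrite (Rpower_Ropp b (- q)), (Rpower_Ropp a (- q)).
  apply Rinv_le_contravar. apply Rpower_pos. apply Rle_Rpower_l; lra.
Qed.

Lemma Rpower_le_1 u q : 1 <= u -> q <= 0 -> Rpower u q <= 1.
Proof.
  intros Hu Hq. rewrite <- (Rpower_O u) by lra. apply Rle_Rpower; lra.
Qed.

Lemma Rpower_m1 u : 0 < u -> Rpower u (-1) = / u.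
Proof. intros H. replace (-1) with (- (1)) by ring. rewrite Rpower_Ropp, Rpower_1; auto. Qed.

Lemma Rpower_m2 u : 0 < u -> Rpower u (-2) = / (u * u).
Proof.
  intros H. replace (-2) with (- INR 2) by (simpl; ring).
  rewrite Rpower_Ropp, Rpower_pow by auto. simpl. f_equal. ring.
Qed.

Lemma Rpower_sqr u q : 0 < u -> Rpower (u * u) q = Rpower u (2 * q).
Proof.
  intros H. replace (u * u) with (Rpower u 2).
  - apply Rpower_mult.
  - replace 2 with (INR 2) by (simpl; ring). rewrite Rpower_pow by auto. simpl. ring.
Qed.

Lemma Rpower_diff_bounds s u v : 0 < s -> 0 < u <= v ->
  2 * s * (v - u) * Rpower v (-1 - 2 * s) <= Rpower u (- 2 * s) - Rpower v (- 2 * s) <=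
  2 * s * (v - u) * Rpower u (-1 - 2 * s).
Proof.
  intros Hs Huv. destruct (Req_dec u v) as [->|Hne].
  - replace (v - v) with 0 by ring. lra.
  - destruct (MVT_cor2 (fun x => Rpower x (-2 * s)) (fun x => (-2 * s) * Rpower x (-2 * s - 1)) u v)
      as [c [Hc1 Hc2]].
    lra. intros c Hc. apply derivable_pt_lim_power. lra.
    replace (-2 * s - 1) with (-1 - 2 * s) in Hc1 by ring.
    assert (H1 : Rpower v (-1 - 2 * s) <= Rpower c (-1 - 2 * s)) by (apply Rpower_le_nonpos; lra).
    assert (H2 : Rpower c (-1 - 2 * s) <= Rpower u (-1 - 2 * s)) by (apply Rpower_le_nonpos; lra).
    replace (Rpower u (- 2 * s) - Rpower v (- 2 * s))
      with (- (Rpower v (-2 * s) - Rpower u (-2 * s))) by ring.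
    rewrite Hc1. split.
    + replace (- (-2 * s * Rpower c (-1 - 2 * s) * (v - u)))
      with (2 * s * (v - u) * Rpower c (-1 - 2 * s)) by ring.
      apply Rmult_le_compat_l; nra.
    + replace (- (-2 * s * Rpower c (-1 - 2 * s) * (v - u)))
      with (2 * s * (v - u) * Rpower c (-1 - 2 * s)) by ring.
      apply Rmult_le_compat_l; nra.
Qed.

Lemma Rpower_small s eps : 0 < s -> 0 < eps -> exists B, 0 < B /\ forall u, B <= u ->
  Rpower u (- s) < eps.
Proof.
  intros Hs He. exists (Rpower eps (- / s) + 1). split. pose proof (Rpower_pos eps (- / s)). lra.
  intros u Hu. assert (HP := Rpower_pos eps (- / s)).
  replace eps with (Rpower (Rpower eps (- / s)) (- s)).
  2:{ rewrite Rpower_mult. replace (- / s * - s) with 1 by (field; lra). apply Rpower_1; auto. }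
  set (q := Rpower eps (- / s)) in *.
  rewrite (Rpower_Ropp q s), (Rpower_Ropp u s). apply Rinv_lt_contravar.
  apply Rmult_lt_0_compat; apply Rpower_pos. apply Rlt_Rpower_l; lra.
Qed.

Lemma Rpower_INR_small s eps : 0 < s -> 0 < eps ->
  exists N0 : nat, forall N, (N0 <= N)%nat -> Rpower (INR N) (- s) < eps.
Proof.
  intros Hs He. destruct (Rpower_small s eps Hs He) as [B [HB HBu]].
  destruct (INR_unbounded B) as [N0 HN0].
  exists N0. intros N HN. apply HBu. apply le_INR in HN. lra.
Qed.

Lemma Rabs_mul_self t : Rabs t * Rabs t = t * t.
Proof. rewrite <- Rabs_mult. apply Rabs_right. apply Rle_ge, Rle_0_sqr. Qed.

Lemma Rabs_IZR_ge_1 c : (c <> 0)%Z -> 1 <= Rabs (IZR c).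
Proof.
  intros H. rewrite <- abs_IZR. apply IZR_le. lia.
Qed.

Lemma Rabs_IZR_affine_le (a1 D m : Z) M : (1 <= D)%Z -> (- Z.of_nat M <= m <= Z.of_nat M)%Z ->
  Rabs (IZR (a1 + D * m)) <= Rabs (IZR a1) + IZR D * INR M.
Proof.
  intros HD Hm. rewrite plus_IZR, mult_IZR. eapply Rle_trans. apply Rabs_triang.
  apply Rplus_le_compat_l. rewrite Rabs_mult.
  rewrite (Rabs_right (IZR D)) by (apply Rle_ge, IZR_le; lia).
  apply Rmult_le_compat_l. apply IZR_le; lia. rewrite INR_IZR_INZ. rewrite <- abs_IZR. apply IZR_le.
  lia.
Qed.

Lemma atan_MVT u v : u <= v -> exists c, u <= c <= v /\ atan v - atan u = (v - u) / (1 + c * c).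
Proof.
  intros H. destruct (Req_dec u v) as [->|Hne].
  - exists v. split. lra. replace (v - v) with 0 by ring. unfold Rdiv. ring.
  - destruct (MVT_cor2 atan (fun x => / (1 + x ^ 2)) u v) as [c [Hc1 Hc2]]. lra.
    intros; apply derivable_pt_lim_atan.
    exists c. split. lra. rewrite Hc1. unfold Rdiv. replace (c ^ 2) with (c * c) by ring. ring.
Qed.

Lemma atan_diff_ge u v : 0 <= u <= v -> (v - u) / (1 + v * v) <= atan v - atan u.
Proof.
  intros H. destruct (atan_MVT u v) as [c [Hc E]]. lra. rewrite E.
  unfold Rdiv. apply Rmult_le_compat_l. lra. apply Rinv_le_contravar. nra. nra.
Qed.

Lemma atan_diff_le u v : 0 <= u <= v -> atan v - atan u <= (v - u) / (1 + u * u).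
Proof.
  intros H. destruct (atan_MVT u v) as [c [Hc E]]. lra. rewrite E.
  unfold Rdiv. apply Rmult_le_compat_l. lra. apply Rinv_le_contravar. nra. nra.
Qed.

Lemma atan_le u v : u <= v -> atan u <= atan v.
Proof. intros H. destruct (Req_dec u v) as [->|]. lra. left; apply atan_increasing; lra. Qed.

Lemma atan_le_id u : 0 <= u -> atan u <= u.
Proof.
  intros H. pose proof (atan_diff_le 0 u (conj (Rle_refl 0) H)) as Hu.
  rewrite atan_0 in Hu. replace ((u - 0) / (1 + 0 * 0)) with u in Hu by field. lra.
Qed.

Lemma atan_ge_PI2_inv T : 0 < T -> PI / 2 - / T <= atan T.
Proof.
  intros H. pose proof (atan_inv T H). pose proof (atan_le_id (/ T)).
  assert (0 < / T) by (apply Rinv_0_lt_compat; auto). lra.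
Qed.

(** * The summand [1 / (w^2 |w|^(2s))] with [w = t + i Y] *)

Definition norm2 (t Y : R) := t * t + Y * Y.

Definition norm2_pow (t Y q : R) := Rpower (norm2 t Y) q.

Lemma norm2_pos t Y : Y <> 0 -> 0 < norm2 t Y.
Proof. intros H. unfold norm2. assert (0 < Y * Y) by (apply Rsqr_pos_lt; auto). nra. Qed.

Lemma norm2_pow_pos t Y q : 0 < norm2_pow t Y q.
Proof. apply Rpower_pos. Qed.

Lemma norm2_pow_add t Y q r : norm2_pow t Y (q + r) = norm2_pow t Y q * norm2_pow t Y r.
Proof. unfold norm2_pow. apply Rpower_plus. Qed.

Lemma norm2_pow_pred t Y q q' : Y <> 0 -> q' = q - 1 ->
  norm2_pow t Y q' = norm2_pow t Y q / norm2 t Y.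
Proof.
  intros HY ->. assert (Hr := norm2_pos t Y HY).
  replace (norm2_pow t Y q) with (norm2_pow t Y (1 + (q - 1))) by (f_equal; ring).
  rewrite norm2_pow_add. unfold norm2_pow. rewrite Rpower_1 by exact Hr. field. lra.
Qed.

Lemma two_abs_mul_le_norm2 t Y : 2 * Rabs t * Rabs Y <= norm2 t Y.
Proof.
  unfold norm2. rewrite <- (Rabs_mul_self t), <- (Rabs_mul_self Y).
  pose proof (Rle_0_sqr (Rabs t - Rabs Y)). unfold Rsqr in H. nra.
Qed.

Lemma sqr_le_norm2_l t Y : t * t <= norm2 t Y.
Proof. unfold norm2. pose proof (Rle_0_sqr Y). unfold Rsqr in H. lra. Qed.

Lemma sqr_le_norm2_r t Y : Y * Y <= norm2 t Y.
Proof. unfold norm2. pose proof (Rle_0_sqr t). unfold Rsqr in H. lra. Qed.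

Lemma Rpower_Cmod t Y s : Y <> 0 -> Rpower (Cmod (t, Y)) (2 * s) = norm2_pow t Y s.
Proof.
  intros H. unfold Cmod, norm2_pow. simpl fst; simpl snd.
  replace (t ^ 2 + Y ^ 2) with (norm2 t Y) by (unfold norm2; ring).
  rewrite <- Rpower_sqrt by (apply norm2_pos; auto).
  rewrite Rpower_mult. f_equal. field.
Qed.

Lemma Cinv_sqr_Cmod_pow t Y s : Y <> 0 ->
  Cinv (Cmult (Cmult (t, Y) (t, Y)) (RtoC (Rpower (Cmod (t, Y)) (2 * s)))) =
  ((t * t - Y * Y) * norm2_pow t Y (-2 - s), - (2 * t * Y) * norm2_pow t Y (-2 - s)).
Proof.
  intros H. rewrite Rpower_Cmod by auto.
  assert (Hr := norm2_pos t Y H).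
  assert (Hp := norm2_pow_pos t Y s).
  assert (E : norm2_pow t Y (-2 - s) = / (norm2 t Y * norm2 t Y * norm2_pow t Y s)).
  { unfold norm2_pow. replace (-2 - s) with (- (INR 2 + s)) by (simpl; ring).
    rewrite Rpower_Ropp, Rpower_plus, Rpower_pow by auto. simpl. f_equal. ring. }
  rewrite E. unfold Cinv, Cmult, RtoC. simpl fst; simpl snd.
  unfold norm2 in *.
  assert (Hq : ((t * t - Y * Y) * norm2_pow t Y s) ^ 2 + ((t * Y + Y * t) * norm2_pow t Y s) ^ 2 <> 0).
  { replace (((t * t - Y * Y) * norm2_pow t Y s) ^ 2 + ((t * Y + Y * t) * norm2_pow t Y s) ^ 2)
      with (((t * t + Y * Y) * norm2_pow t Y s) ^ 2) by ring.
    apply pow_nonzero. apply Rgt_not_eq. apply Rmult_lt_0_compat; lra. }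
  f_equal; field; repeat split; lra.
Qed.

Lemma is_derive_eq (f : R -> R) (x l l' : R) : is_derive f x l -> l = l' -> is_derive f x l'.
Proof. intros H ->; exact H. Qed.

Lemma is_derive_Rplus (f g : R -> R) (x df dg : R) : is_derive f x df -> is_derive g x dg ->
  is_derive (fun t => f t + g t) x (df + dg).
Proof.
  intros H1 H2. apply is_derive_Reals. apply is_derive_Reals in H1, H2.
  exact (derivable_pt_lim_plus f g x df dg H1 H2).
Qed.

Lemma is_derive_Rmult (f g : R -> R) (x df dg : R) : is_derive f x df -> is_derive g x dg ->
  is_derive (fun t => f t * g t) x (df * g x + f x * dg).
Proof.
  intros H1 H2. apply is_derive_Reals. apply is_derive_Reals in H1, H2.
  exact (derivable_pt_lim_mult f g x df dg H1 H2).
Qed.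

Lemma is_derive_Ropp (f : R -> R) (x l : R) : is_derive f x l -> is_derive (fun t => - f t) x (- l).
Proof.
  intros H. apply is_derive_Reals. apply is_derive_Reals in H.
  exact (derivable_pt_lim_opp f x l H).
Qed.

Lemma is_derive_Rscal (f : R -> R) (k x l : R) : is_derive f x l ->
  is_derive (fun t => k * f t) x (k * l).
Proof.
  intros H. apply (is_derive_eq _ _ (0 * f x + k * l)); [|ring].
  apply (is_derive_Rmult (fun _ => k) f); [auto_derive; auto | exact H].
Qed.

Lemma is_derive_norm2_pow Y q q' t : Y <> 0 -> q' = q - 1 ->
  is_derive (fun t => norm2_pow t Y q) t (2 * q * t * norm2_pow t Y q').
Proof.
  intros HY ->. unfold norm2_pow, norm2. apply is_derive_Reals.
  assert (H2 : derivable_pt_lim (fun t => t * t + Y * Y) t (2 * t)).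
  { apply is_derive_Reals. auto_derive; [auto | ring]. }
  assert (H := derivable_pt_lim_comp _ (fun x => Rpower x q) t _ _ H2
                 (derivable_pt_lim_power _ q (norm2_pos t Y HY))).
  unfold comp in H. replace (2 * q * t * Rpower (t * t + Y * Y) (q - 1))
    with (q * Rpower (t * t + Y * Y) (q - 1) * (2 * t)) by ring.
  exact H.
Qed.

Lemma taylor2_remainder_le (f f1 f2 : R -> R) a h M :
  (forall u, Rmin a (a + h) <= u <= Rmax a (a + h) ->
     is_derive f u (f1 u) /\ is_derive f1 u (f2 u) /\ Rabs (f2 u) <= M) ->
  Rabs (f (a + h) - f a - h * f1 a) <= M * (h * h).
Proof.
  intros H.
  destruct (MVT_abs (fun u => f u + (- f1 a) * u) (fun u => f1 u - f1 a) a (a + h)) as [c [Hc1 Hc2]].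
  { intros c Hc. apply is_derive_Reals.
    apply (is_derive_eq _ _ (f1 c + (0 * c + (- f1 a) * 1))); [|ring].
    apply (is_derive_Rplus f (fun u => - f1 a * u));
      [exact (proj1 (H c Hc)) | auto_derive; [auto | ring]]. }
  replace (f (a + h) - f a - h * f1 a)
    with (f (a + h) + (- f1 a) * (a + h) - (f a + (- f1 a) * a)) by ring.
  rewrite Hc1.
  assert (Hsub : forall u, Rmin a c <= u <= Rmax a c -> Rmin a (a + h) <= u <= Rmax a (a + h)).
  { intros u Hu. unfold Rmin, Rmax in Hu, Hc2 |- *.
    destruct (Rle_dec a c), (Rle_dec a (a + h)); lra. }
  destruct (MVT_abs f1 f2 a c) as [c' [Hc'1 Hc'2]].
  { intros u Hu. apply is_derive_Reals, (H u (Hsub u Hu)). }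
  rewrite Hc'1.
  assert (HM := proj2 (proj2 (H c' (Hsub c' Hc'2)))).
  assert (Hca : Rabs (c - a) <= Rabs h).
  { replace h with (a + h - a) by ring. unfold Rmin, Rmax in Hc2. destruct (Rle_dec a (a + h)).
    - rewrite !Rabs_right; lra.
    - rewrite !Rabs_left1; lra. }
  replace (a + h - a) with h by ring.
  assert (0 <= M) by (eapply Rle_trans; [apply Rabs_pos | exact HM]).
  rewrite <- Rabs_mul_self, <- Rmult_assoc.
  apply Rmult_le_compat_r; [apply Rabs_pos|].
  apply Rmult_le_compat; auto using Rabs_pos.
Qed.

(** [prim_re] and [prim_im] are [t]-antiderivatives of [(1+s) Re + s (t^2+Y^2)^(-1-s)] and
    [(1+s) Im] of the summand; [der_*] and [der2_*] are their first two derivatives. *)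
Definition prim_re s Y t := - t * norm2_pow t Y (-1 - s).

Definition der_re s Y t
  := - norm2_pow t Y (-1 - s) + 2 * (1 + s) * (t * t) * norm2_pow t Y (-2 - s).

Definition der2_re s Y t
  := 6 * (1 + s) * t * norm2_pow t Y (-2 - s)
    - 4 * (1 + s) * (2 + s) * (t * t * t) * norm2_pow t Y (-3 - s).

Definition prim_im s Y t := Y * norm2_pow t Y (-1 - s).

Definition der_im s Y t := -2 * (1 + s) * Y * t * norm2_pow t Y (-2 - s).

Definition der2_im s Y t
  := -2 * (1 + s) * Y * norm2_pow t Y (-2 - s)
    + 4 * (1 + s) * (2 + s) * Y * (t * t) * norm2_pow t Y (-3 - s).

Lemma is_derive_prim_re s Y t : Y <> 0 -> is_derive (prim_re s Y) t (der_re s Y t).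
Proof.
  intros HY.
  apply (is_derive_eq _ _ ((-1) * norm2_pow t Y (-1 - s)
                           + (- t) * (2 * (-1 - s) * t * norm2_pow t Y (-2 - s))));
    [|unfold der_re; ring].
  unfold prim_re.
  apply (is_derive_Rmult (fun t => - t) (fun t => norm2_pow t Y (-1 - s)));
    [auto_derive; [auto | ring] |].
  apply is_derive_norm2_pow; auto; ring.
Qed.

Lemma is_derive_der_re s Y t : Y <> 0 -> is_derive (der_re s Y) t (der2_re s Y t).
Proof.
  intros HY.
  apply (is_derive_eq _ _ (- (2 * (-1 - s) * t * norm2_pow t Y (-2 - s))
      + ((2 * (1 + s) * (2 * t)) * norm2_pow t Y (-2 - s)
         + (2 * (1 + s) * (t * t)) * (2 * (-2 - s) * t * norm2_pow t Y (-3 - s)))));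
    [|unfold der2_re; ring].
  unfold der_re.
  apply (is_derive_Rplus (fun t => - norm2_pow t Y (-1 - s)));
    [apply is_derive_Ropp, is_derive_norm2_pow; auto; ring |].
  apply (is_derive_Rmult (fun t => 2 * (1 + s) * (t * t)) (fun t => norm2_pow t Y (-2 - s)));
    [auto_derive; [auto | ring] |].
  apply is_derive_norm2_pow; auto; ring.
Qed.

Lemma is_derive_prim_im s Y t : Y <> 0 -> is_derive (prim_im s Y) t (der_im s Y t).
Proof.
  intros HY.
  apply (is_derive_eq _ _ (Y * (2 * (-1 - s) * t * norm2_pow t Y (-2 - s))));
    [|unfold der_im; ring].
  unfold prim_im. apply is_derive_Rscal, is_derive_norm2_pow; auto; ring.
Qed.

Lemma is_derive_der_im s Y t : Y <> 0 -> is_derive (der_im s Y) t (der2_im s Y t).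
Proof.
  intros HY.
  apply (is_derive_eq _ _ ((-2 * (1 + s) * Y * 1) * norm2_pow t Y (-2 - s)
      + (-2 * (1 + s) * Y * t) * (2 * (-2 - s) * t * norm2_pow t Y (-3 - s))));
    [|unfold der2_im; ring].
  unfold der_im.
  apply (is_derive_Rmult (fun t => -2 * (1 + s) * Y * t) (fun t => norm2_pow t Y (-2 - s)));
    [auto_derive; [auto | ring] |].
  apply is_derive_norm2_pow; auto; ring.
Qed.

Lemma Rabs_cubic_quotient_le P r Y u Q K : 0 < P -> 0 < r -> Y <> 0 ->
  Rabs Q <= K * r -> K * Rabs u * Rabs Y <= 28 * r ->
  Rabs (P / (r * r * r) * (u * Q)) <= 28 * P / (Rabs Y * r).
Proof.
  intros HP Hr HY HQ Hu. assert (HaY : 0 < Rabs Y) by (apply Rabs_pos_lt; auto).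
  assert (Hc : 0 < P / (r * r * r)) by (apply Rdiv_lt_0_compat; auto; repeat apply Rmult_lt_0_compat; auto).
  rewrite !Rabs_mult, (Rabs_right (P / (r * r * r))) by lra.
  apply (Rle_trans _ (P / (r * r * r) * (Rabs u * (K * r)))).
  - apply Rmult_le_compat_l, Rmult_le_compat_l; auto using Rabs_pos; lra.
  - apply (Rmult_le_reg_r (Rabs Y * r * r * r)); [repeat apply Rmult_lt_0_compat; auto|].
    replace (P / (r * r * r) * (Rabs u * (K * r)) * (Rabs Y * r * r * r))
      with (P * r * (K * Rabs u * Rabs Y)) by (field; lra).
    replace (28 * P / (Rabs Y * r) * (Rabs Y * r * r * r)) with (P * r * (28 * r)) by (field; lra).
    apply Rmult_le_compat_l; [nra | exact Hu].
Qed.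

Lemma der2_re_bound s Y t : 0 <= s <= 1 -> Y <> 0 ->
  Rabs (der2_re s Y t) <= 28 * norm2_pow t Y (- s) / (Rabs Y * norm2 t Y).
Proof.
  intros Hs HY. unfold der2_re.
  assert (Hr := norm2_pos t Y HY). assert (HP := norm2_pow_pos t Y (- s)).
  rewrite (norm2_pow_pred t Y (-2 - s) (-3 - s)), (norm2_pow_pred t Y (-1 - s) (-2 - s)),
    (norm2_pow_pred t Y (- s) (-1 - s)) by (auto; ring).
  set (r := norm2 t Y) in *. set (P := norm2_pow t Y (- s)) in *.
  replace (6 * (1 + s) * t * (P / r / r) - 4 * (1 + s) * (2 + s) * (t * t * t) * (P / r / r / r))
    with (P / (r * r * r) * (t * (6 * (1 + s) * r - 4 * (1 + s) * (2 + s) * (t * t)))) by (field; lra).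
  apply (Rabs_cubic_quotient_le _ _ _ _ _ 36); auto.
  - pose proof (sqr_le_norm2_l t Y) as Ht. fold r in Ht. pose proof (Rle_0_sqr t). unfold Rsqr in *.
    assert (Hk : 0 <= (1 + s) * (2 + s) <= 6) by nra.
    assert (0 <= (1 + s) * (2 + s) * (t * t) <= 6 * r) by (split; nra).
    apply Rabs_le. split; nra.
  - pose proof (two_abs_mul_le_norm2 t Y) as Ht. fold r in Ht. lra.
Qed.

Lemma der2_im_bound s Y t : 0 <= s <= 1 -> Y <> 0 ->
  Rabs (der2_im s Y t) <= 28 * norm2_pow t Y (- s) / (Rabs Y * norm2 t Y).
Proof.
  intros Hs HY. unfold der2_im.
  assert (Hr := norm2_pos t Y HY). assert (HP := norm2_pow_pos t Y (- s)).
  rewrite (norm2_pow_pred t Y (-2 - s) (-3 - s)), (norm2_pow_pred t Y (-1 - s) (-2 - s)),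
    (norm2_pow_pred t Y (- s) (-1 - s)) by (auto; ring).
  set (r := norm2 t Y) in *. set (P := norm2_pow t Y (- s)) in *.
  replace (-2 * (1 + s) * Y * (P / r / r) + 4 * (1 + s) * (2 + s) * Y * (t * t) * (P / r / r / r))
    with (P / (r * r * r) * (Y * (-2 * (1 + s) * r + 4 * (1 + s) * (2 + s) * (t * t)))) by (field; lra).
  apply (Rabs_cubic_quotient_le _ _ _ _ _ 28); auto.
  - pose proof (sqr_le_norm2_l t Y) as Ht. fold r in Ht. pose proof (Rle_0_sqr t). unfold Rsqr in *.
    assert (Hk : 0 <= (1 + s) * (2 + s) <= 6) by nra.
    assert (0 <= (1 + s) * (2 + s) * (t * t) <= 6 * r) by (split; nra).
    apply Rabs_le. split; nra.
  - pose proof (sqr_le_norm2_r t Y) as HYr. fold r in HYr. rewrite Rmult_assoc, Rabs_mul_self. lra.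
Qed.

Lemma norm2_pow_neg_le t Y s : 0 <= s <= 1 -> Y <> 0 -> norm2_pow t Y (- s) <= 1 + / (Y * Y).
Proof.
  intros Hs HY. assert (Hr := norm2_pos t Y HY).
  assert (HY2 : 0 < Y * Y) by (apply Rsqr_pos_lt; auto).
  assert (HiY : 0 < / (Y * Y)) by (apply Rinv_0_lt_compat; auto).
  unfold norm2_pow. destruct (Rle_lt_dec 1 (norm2 t Y)) as [H1|H1].
  - assert (Rpower (norm2 t Y) (- s) <= Rpower (norm2 t Y) 0) by (apply Rle_Rpower; lra).
    rewrite Rpower_O in H by lra. lra.
  - assert (E : Rpower (norm2 t Y) (- s) = Rpower (/ norm2 t Y) s).
    { unfold Rpower. rewrite ln_Rinv by lra. f_equal. ring. }
    rewrite E.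
    assert (Hb : 1 <= / norm2 t Y). { rewrite <- Rinv_1. apply Rinv_le_contravar; lra. }
    assert (Rpower (/ norm2 t Y) s <= Rpower (/ norm2 t Y) 1) by (apply Rle_Rpower; lra).
    rewrite Rpower_1 in H by lra.
    assert (/ norm2 t Y <= / (Y * Y)). { apply Rinv_le_contravar; auto. apply sqr_le_norm2_r. }
    lra.
Qed.

Lemma norm2_shift_le t u Y y d : 0 < y -> y * y <= Y * Y -> Rabs (u - t) <= d ->
  y * y * norm2 t Y <= 4 * (y * y + d * d) * norm2 u Y.
Proof.
  intros Hy HY Hud. unfold norm2.
  set (e := u - t). replace u with (t + e) by (unfold e; ring).
  assert (He : e * e <= d * d).
  { rewrite <- (Rabs_mul_self e). pose proof (Rabs_pos e). assert (Rabs e <= d) by exact Hud.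
    apply Rmult_le_compat; lra. }
  assert (H1 : t * t <= 2 * ((t + e) * (t + e)) + 2 * (e * e)).
  { pose proof (Rle_0_sqr (t + 2 * e)). unfold Rsqr in H. nra. }
  assert (H2 : 0 <= (t + e) * (t + e)) by apply Rle_0_sqr.
  assert (Hd : 0 <= d * d) by apply Rle_0_sqr.
  nra.
Qed.

Definition defect_const y d := 112 * d * (1 + / (y * y)) * (y * y + d * d) / (y * y).

Lemma defect_bound (G g h : R -> R) (s Y t y d : R) : 0 <= s <= 1 -> 0 < y -> y <= Rabs Y ->
  0 < d ->
  (forall u, is_derive G u (g u)) -> (forall u, is_derive g u (h u)) ->
  (forall u, Rabs (h u) <= 28 * norm2_pow u Y (- s) / (Rabs Y * norm2 u Y)) ->
  Rabs (g t - (G (t + d) - G t) / d) <= defect_const y d / (Rabs Y * norm2 t Y).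
Proof.
  intros Hs Hy HyY Hd HG Hg Hh.
  assert (HY : Y <> 0). { intros ->. rewrite Rabs_R0 in HyY. lra. }
  assert (HaY : 0 < Rabs Y) by lra.
  assert (Hy2 : y * y <= Y * Y). { rewrite <- (Rabs_mul_self Y). nra. }
  assert (Hr := norm2_pos t Y HY).
  set (M := 28 * (1 + / (y * y)) * (4 * (y * y + d * d)) / (y * y) / (Rabs Y * norm2 t Y)).
  assert (Hmid : Rabs (G (t + d) - G t - d * g t) <= M * (d * d)).
  { apply (taylor2_remainder_le G g h t d M). intros u Hu. split; [apply HG | split; [apply Hg |]].
    eapply Rle_trans. apply Hh.
    assert (Hru := norm2_pos u Y HY).
    assert (Hsh : y * y * norm2 t Y <= 4 * (y * y + d * d) * norm2 u Y).
    { apply norm2_shift_le; auto. unfold Rmin, Rmax in Hu. destruct (Rle_dec t (t + d)); 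
      apply Rabs_le; lra. }
    assert (HP := norm2_pow_neg_le u Y s Hs HY).
    assert (HP0 := norm2_pow_pos u Y (-s)).
    assert (Hiy : / (Y * Y) <= / (y * y)) by (apply Rinv_le_contravar; nra).
    unfold M. unfold Rdiv.
    apply (Rle_trans _ (28 * (1 + / (y * y)) * / (Rabs Y * norm2 u Y))).
    - apply Rmult_le_compat_r. apply Rlt_le, Rinv_0_lt_compat, Rmult_lt_0_compat; auto. lra.
    - assert (0 < / (y * y)) by (apply Rinv_0_lt_compat; nra).
      apply (Rmult_le_reg_r (Rabs Y * norm2 u Y * norm2 t Y * (y * y))). 
      repeat apply Rmult_lt_0_compat; nra.
      replace (28 * (1 + / (y * y)) * / (Rabs Y * norm2 u Y) * (Rabs Y * norm2 u Y * norm2 t Y * (y * y)))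
        with (28 * (1 + / (y * y)) * (y * y * norm2 t Y)) by (field; repeat split; nra).
      replace (28 * (1 + / (y * y)) * (4 * (y * y + d * d)) * / (y * y) * / (Rabs Y * norm2 t Y) *
          (Rabs Y * norm2 u Y * norm2 t Y * (y * y))) with (28 * (1 + / (y * y))
            * (4 * (y * y + d * d) * norm2 u Y))
        by (field; repeat split; nra).
      apply Rmult_le_compat_l; auto. nra. }
  replace (g t - (G (t + d) - G t) / d) with (- (G (t + d) - G t - d * g t) / d) by (field; lra).
  unfold Rdiv at 1.
  rewrite Rabs_mult, Rabs_Ropp, (Rabs_right (/ d))
    by (apply Rle_ge, Rlt_le, Rinv_0_lt_compat; auto).
  apply (Rle_trans _ (M * (d * d) * / d)).
  - apply Rmult_le_compat_r; auto. apply Rlt_le, Rinv_0_lt_compat; auto.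
  - unfold M, defect_const. right. field. repeat split; nra.
Qed.

(** * Sums along a row: [sum_n 1 / (b^2 + (X + d n)^2)] *)

(** The terms are compared with the increments of the antiderivative [atan (t/b) / b],
    split at [0] into two monotone pieces; the terms with [|t| < d], where the
    comparison fails, are absorbed by two unit steps ([bump]). *)
Definition atan_prim (b t : R) := atan (t / b) / b.

Definition atan_prim_pos b t := atan_prim b (Rmax t 0).

Definition atan_prim_neg b t := atan_prim b (Rmin t 0).

Definition step (c t : R) := if Rlt_dec c t then 1 else 0.

Lemma atan_prim_diff_ge b u v : 0 < b -> 0 <= u <= v ->
  (v - u) / (b * b + v * v) <= atan_prim b v - atan_prim b u.
Proof.
  intros Hb H. unfold atan_prim. 
  assert (H1 := atan_diff_ge (u / b) (v / b)).
  assert (0 <= u / b <= v / b).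
  { split; unfold Rdiv; apply Rmult_le_compat_r || apply Rmult_le_pos; try lra;
     left; apply Rinv_0_lt_compat; auto. }
  specialize (H1 H0).
  replace ((v - u) / (b * b + v * v))
    with ((v / b - u / b) / (1 + v / b * (v / b)) / b) by (field; split; nra).
  replace (atan (v / b) / b - atan (u / b) / b)
    with ((atan (v / b) - atan (u / b)) / b) by (field; lra).
  unfold Rdiv at 1 3. apply Rmult_le_compat_r. left; apply Rinv_0_lt_compat; auto. exact H1.
Qed.

Lemma atan_prim_diff_le b u v : 0 < b -> 0 <= u <= v ->
  atan_prim b v - atan_prim b u <= (v - u) / (b * b + u * u).
Proof.
  intros Hb H. unfold atan_prim. 
  assert (H1 := atan_diff_le (u / b) (v / b)).
  assert (0 <= u / b <= v / b).
  { split; unfold Rdiv; apply Rmult_le_compat_r || apply Rmult_le_pos; try lra;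
     left; apply Rinv_0_lt_compat; auto. }
  specialize (H1 H0).
  replace ((v - u) / (b * b + u * u))
    with ((v / b - u / b) / (1 + u / b * (u / b)) / b) by (field; split; nra).
  replace (atan (v / b) / b - atan (u / b) / b)
    with ((atan (v / b) - atan (u / b)) / b) by (field; lra).
  unfold Rdiv at 1 3. apply Rmult_le_compat_r. left; apply Rinv_0_lt_compat; auto. exact H1.
Qed.

Lemma atan_prim_opp b u : atan_prim b (- u) = - atan_prim b u.
Proof.
  unfold atan_prim. replace (- u / b) with (- (u / b)) by (unfold Rdiv; ring).
  rewrite atan_opp. unfold Rdiv; ring.
Qed.

Lemma atan_prim_le b u v : 0 < b -> u <= v -> atan_prim b u <= atan_prim b v.
Proof.
  intros Hb H. assert (Hb' : 0 <= / b) by (apply Rlt_le, Rinv_0_lt_compat; auto).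
  unfold atan_prim, Rdiv. apply Rmult_le_compat_r; [exact Hb'|].
  apply atan_le, Rmult_le_compat_r; auto.
Qed.

Lemma atan_prim_bound b u : 0 < b -> - PI / (2 * b) < atan_prim b u < PI / (2 * b).
Proof.
  intros Hb. unfold atan_prim. pose proof (atan_bound (u / b)).
  replace (- PI / (2 * b)) with ((- PI / 2) / b) by (field; lra).
  replace (PI / (2 * b)) with ((PI / 2) / b) by (field; lra).
  split; apply Rmult_lt_compat_r; try (apply Rinv_0_lt_compat; auto); lra.
Qed.

Lemma atan_prim_0 b : atan_prim b 0 = 0.
Proof. unfold atan_prim. unfold Rdiv. rewrite Rmult_0_l, atan_0. ring. Qed.

Lemma atan_prim_ge_PI2_inv b K : 0 < b -> 0 < K -> PI / (2 * b) - / K <= atan_prim b K.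
Proof.
  intros Hb HK. unfold atan_prim.
  pose proof (atan_ge_PI2_inv (K / b) ltac:(apply Rdiv_lt_0_compat; auto)).
  replace (PI / (2 * b) - / K) with ((PI / 2 - / (K / b)) / b) by (field; lra).
  apply Rmult_le_compat_r; [apply Rlt_le, Rinv_0_lt_compat |]; auto.
Qed.

Lemma atan_prim_le_lin b u : 0 < b -> 0 <= u -> atan_prim b u <= u / (b * b).
Proof.
  intros Hb Hu. pose proof (atan_prim_diff_le b 0 u Hb (conj (Rle_refl 0) Hu)).
  rewrite atan_prim_0 in H.
  replace ((u - 0) / (b * b + 0 * 0)) with (u / (b * b)) in H by (field; lra). lra.
Qed.

Lemma step_le c u v : u <= v -> step c u <= step c v.
Proof. intros H. unfold step. destruct (Rlt_dec c u); destruct (Rlt_dec c v); lra. Qed.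

Lemma step_bound c u : 0 <= step c u <= 1.
Proof. unfold step. destruct (Rlt_dec c u); lra. Qed.

Definition bump (d t : R) := (step (- d) t - step (- d) (t - d)) + (step 0 t - step 0 (t - d)).

Lemma bump_ge0 d t : 0 < d -> 0 <= bump d t.
Proof.
  intros Hd. unfold bump. pose proof (step_le (-d) (t - d) t).
  pose proof (step_le 0 (t - d) t). lra.
Qed.

Lemma bump_ge1 d t : 0 < d -> - d < t < d -> 1 <= bump d t.
Proof.
  intros Hd Ht. unfold bump, step.
  destruct (Rlt_dec (-d) t), (Rlt_dec (-d) (t - d)), (Rlt_dec 0 t), (Rlt_dec 0 (t - d)); lra.
Qed.

Lemma atan_prim_pos_ge0 b u : 0 < b -> 0 <= atan_prim_pos b u.
Proof.
  intros Hb. unfold atan_prim_pos. pose proof (atan_prim_le b 0 (Rmax u 0) Hb (Rmax_r u 0)).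
  rewrite atan_prim_0 in H. exact H.
Qed.

Lemma atan_prim_neg_le0 b u : 0 < b -> atan_prim_neg b u <= 0.
Proof.
  intros Hb. unfold atan_prim_neg. pose proof (atan_prim_le b (Rmin u 0) 0 Hb (Rmin_r u 0)).
  rewrite atan_prim_0 in H. exact H.
Qed.

Lemma atan_prim_pos_le b u v : 0 < b -> u <= v -> atan_prim_pos b u <= atan_prim_pos b v.
Proof.
  intros Hb H. unfold atan_prim_pos. apply atan_prim_le; auto. unfold Rmax.
  destruct (Rle_dec u 0); destruct (Rle_dec v 0); lra.
Qed.

Lemma atan_prim_neg_le b u v : 0 < b -> u <= v -> atan_prim_neg b u <= atan_prim_neg b v.
Proof.
  intros Hb H. unfold atan_prim_neg. apply atan_prim_le; auto. unfold Rmin.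
  destruct (Rle_dec u 0); destruct (Rle_dec v 0); lra.
Qed.

Lemma Rinv_sqr_add_le b t : 0 < b -> / (b * b + t * t) <= / (b * b).
Proof.
  intros Hb. apply Rinv_le_contravar. nra. pose proof (Rle_0_sqr t). unfold Rsqr in H. lra.
Qed.

Lemma lorentz_term_le b d t : 0 < b -> 0 < d ->
  d * / (b * b + t * t)
    <= (atan_prim_pos b (t + d - d) - atan_prim_pos b (t - d))
      + (atan_prim_neg b (t + d) - atan_prim_neg b t)
     + d / (b * b) * bump d t.
Proof.
  intros Hb Hd. replace (t + d - d) with t by ring.
  assert (Hq := bump_ge0 d t Hd).
  assert (HA1 := atan_prim_pos_le b (t - d) t Hb ltac:(lra)).
  assert (HA2 := atan_prim_neg_le b t (t + d) Hb ltac:(lra)).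
  assert (Hbb : 0 < b * b) by nra.
  assert (Hdb : 0 <= d / (b * b)) by (apply Rlt_le, Rdiv_lt_0_compat; auto).
  destruct (Rle_dec d t) as [H1|H1].
  - unfold atan_prim_pos. rewrite (Rmax_left t 0) by lra. rewrite (Rmax_left (t - d) 0) by lra.
    pose proof (atan_prim_diff_ge b (t - d) t Hb ltac:(lra)).
    replace ((t - (t - d)) / (b * b + t * t))
      with (d * / (b * b + t * t)) in H by (unfold Rdiv; ring).
    assert (0 <= d / (b * b) * bump d t) by (apply Rmult_le_pos; auto). lra.
  - destruct (Rle_dec t (- d)) as [H2|H2].
    + unfold atan_prim_neg. rewrite (Rmin_left t 0) by lra. rewrite (Rmin_left (t + d) 0) by lra.
      pose proof (atan_prim_diff_ge b (- t - d) (- t) Hb ltac:(lra)).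
      replace (- t - d) with (- (t + d)) in H by ring. rewrite !atan_prim_opp in H.
      replace ((- t - - (t + d)) / (b * b + - t * - t))
        with (d * / (b * b + t * t)) in H by (field; nra).
      assert (0 <= d / (b * b) * bump d t) by (apply Rmult_le_pos; auto). lra.
    + assert (Hq1 := bump_ge1 d t Hd ltac:(lra)).
      assert (d * / (b * b + t * t) <= d / (b * b)).
      { unfold Rdiv. apply Rmult_le_compat_l. lra. apply Rinv_sqr_add_le; auto. }
      assert (d / (b * b) <= d / (b * b) * bump d t).
      { rewrite <- (Rmult_1_r (d / (b * b))) at 1. apply Rmult_le_compat_l; auto. }
      lra.
Qed.

Lemma lorentz_term_ge b d t : 0 < b -> 0 < d ->
  (atan_prim_pos b (t + d) - atan_prim_pos b t)
    + (atan_prim_neg b (t + d - d) - atan_prim_neg b (t - d)) - d / (b * b) * bump d t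
    <= d * / (b * b + t * t).
Proof.
  intros Hb Hd. replace (t + d - d) with t by ring.
  assert (Hq := bump_ge0 d t Hd).
  assert (Hbb : 0 < b * b) by nra.
  assert (Hdb : 0 <= d / (b * b)) by (apply Rlt_le, Rdiv_lt_0_compat; auto).
  assert (Hf : 0 <= d * / (b * b + t * t)). { apply Rmult_le_pos. lra. left; apply Rinv_0_lt_compat.
     pose proof (Rle_0_sqr t). unfold Rsqr in H. lra. }
  destruct (Rle_dec 0 t) as [H1|H1].
  - unfold atan_prim_pos. rewrite (Rmax_left t 0) by lra. rewrite (Rmax_left (t + d) 0) by lra.
    pose proof (atan_prim_diff_le b t (t + d) Hb ltac:(lra)).
    replace ((t + d - t) / (b * b + t * t))
      with (d * / (b * b + t * t)) in H by (unfold Rdiv; ring).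
    destruct (Rle_dec d t) as [H2|H2].
    + unfold atan_prim_neg. rewrite (Rmin_right t 0) by lra. rewrite (Rmin_right (t - d) 0) by lra.
      assert (0 <= d / (b * b) * bump d t) by (apply Rmult_le_pos; auto). lra.
    + unfold atan_prim_neg. rewrite (Rmin_right t 0) by lra. rewrite (Rmin_left (t - d) 0) by lra.
      rewrite atan_prim_0. replace (t - d) with (- (d - t)) by ring. rewrite atan_prim_opp.
      pose proof (atan_prim_le_lin b (d - t) Hb ltac:(lra)).
      assert (Hq1 := bump_ge1 d t Hd ltac:(lra)).
      assert ((d - t) / (b * b) <= d / (b * b) * bump d t).
      { apply (Rle_trans _ (d / (b * b))). unfold Rdiv. apply Rmult_le_compat_r.
        left; apply Rinv_0_lt_compat; auto. lra.
        rewrite <- (Rmult_1_r (d / (b * b))) at 1. apply Rmult_le_compat_l; auto. }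
      lra.
  - unfold atan_prim_neg. rewrite (Rmin_left t 0) by lra. rewrite (Rmin_left (t - d) 0) by lra.
    pose proof (atan_prim_diff_le b (- t) (d - t) Hb ltac:(lra)).
    replace (d - t) with (- (t - d)) in H by ring. rewrite !atan_prim_opp in H.
    replace ((- (t - d) - - t) / (b * b + - t * - t))
      with (d * / (b * b + t * t)) in H by (field; nra).
    destruct (Rle_dec (t + d) 0) as [H2|H2].
    + unfold atan_prim_pos. rewrite (Rmax_right t 0) by lra. rewrite (Rmax_right (t + d) 0) by lra.
      assert (0 <= d / (b * b) * bump d t) by (apply Rmult_le_pos; auto). lra.
    + unfold atan_prim_pos. rewrite (Rmax_right t 0) by lra. rewrite (Rmax_left (t + d) 0) by lra.
      rewrite atan_prim_0. pose proof (atan_prim_le_lin b (t + d) Hb ltac:(lra)).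
      assert (Hq1 := bump_ge1 d t Hd ltac:(lra)).
      assert ((t + d) / (b * b) <= d / (b * b) * bump d t).
      { apply (Rle_trans _ (d / (b * b))). unfold Rdiv. apply Rmult_le_compat_r.
        left; apply Rinv_0_lt_compat; auto. lra.
        rewrite <- (Rmult_1_r (d / (b * b))) at 1. apply Rmult_le_compat_l; auto. }
      lra.
Qed.

Lemma zsum_bump_le d X N : 0 < d -> zsum N (fun n => bump d (X + d * IZR n)) <= 2.
Proof.
  intros Hd. unfold bump.
  rewrite (zsum_ext N _ (fun n => (step (-d) (X + d * IZR n + d - d) - step (-d) (X + d * IZR n - d))
                                 + (step 0 (X + d * IZR n + d - d) - step 0 (X + d * IZR n - d))))
    by (intros; rewrite !Rplus_minus_r; reflexivity).
  rewrite zsum_add.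
  pose proof (zsum_telescope_affine_le X d N (fun u => step (-d) (u - d)) 0 1 (fun _ => step_bound _ _)).
  pose proof (zsum_telescope_affine_le X d N (fun u => step 0 (u - d)) 0 1 (fun _ => step_bound _ _)).
  cbv beta in *. lra.
Qed.

Lemma zsum_lorentz_le b d X N : 0 < b -> 0 < d ->
  zsum N (fun n => / (b * b + (X + d * IZR n) * (X + d * IZR n))) <= PI / (d * b) + 2 / (b * b).
Proof.
  intros Hb Hd.
  apply (Rmult_le_reg_l d); auto. rewrite <- zsum_scal.
  eapply Rle_trans. apply zsum_le. intros k _. apply lorentz_term_le; auto.
  rewrite !zsum_add. rewrite zsum_scal.
  assert (H1 := zsum_telescope_affine_le X d N (fun u => atan_prim_pos b (u - d)) 0 (PI / (2 * b))).
  assert (H2 := zsum_telescope_affine_le X d N (fun u => atan_prim_neg b u) (- (PI / (2 * b))) 0).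
  assert (H3 := zsum_bump_le d X N Hd).
  assert (Hb1 : forall u, 0 <= atan_prim_pos b u <= PI / (2 * b)).
  { intros u. split. apply atan_prim_pos_ge0; auto. unfold atan_prim_pos.
    pose proof (atan_prim_bound b (Rmax u 0) Hb). lra. }
  assert (Hb2 : forall u, - (PI / (2 * b)) <= atan_prim_neg b u <= 0).
  { intros u. split. unfold atan_prim_neg. pose proof (atan_prim_bound b (Rmin u 0) Hb). 
    replace (- (PI / (2 * b))) with (- PI / (2 * b)) by (field; lra). lra.
    apply atan_prim_neg_le0; auto. }
  specialize (H1 (fun u => Hb1 (u - d))). specialize (H2 Hb2).
  assert (Hbb : 0 < b * b) by nra.
  assert (d / (b * b) * zsum N (fun n => bump d (X + d * IZR n)) <= d / (b * b) * 2).
  { apply Rmult_le_compat_l; auto. apply Rlt_le, Rdiv_lt_0_compat; auto. }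
  replace (d * (PI / (d * b) + 2 / (b * b)))
    with (PI / (2 * b) - 0 + (0 - - (PI / (2 * b))) + d / (b * b) * 2) by (field; lra).
  lra.
Qed.

Lemma zsum_lorentz_ge b d X N Kc : 0 < b -> 0 < d -> 0 < Kc ->
  Kc <= X + d * IZR (Z.of_nat N) -> X + d * IZR (- Z.of_nat N) <= - Kc ->
  PI / (d * b) - 2 / (d * Kc) - 2 / (b * b) <=
  zsum N (fun n => / (b * b + (X + d * IZR n) * (X + d * IZR n))).
Proof.
  intros Hb Hd HK H1 H2.
  apply (Rmult_le_reg_l d); auto. rewrite <- zsum_scal.
  eapply Rle_trans. 2:{ apply zsum_le. intros k _. apply lorentz_term_ge; auto. }
  rewrite !zsum_sub, !zsum_add. rewrite zsum_scal.
  rewrite (zsum_telescope_affine X d N (fun u => atan_prim_pos b u)).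
  rewrite (zsum_telescope_affine X d N (fun u => atan_prim_neg b (u - d))).
  assert (H3 := zsum_bump_le d X N Hd).
  assert (Hbb : 0 < b * b) by nra.
  assert (d / (b * b) * zsum N (fun n => bump d (X + d * IZR n)) <= d / (b * b) * 2).
  { apply Rmult_le_compat_l; auto. apply Rlt_le, Rdiv_lt_0_compat; auto. }
  assert (E1 : atan_prim_pos b (X + d * IZR (- Z.of_nat N)) = 0).
  { unfold atan_prim_pos. rewrite Rmax_right by lra. apply atan_prim_0. }
  assert (E2 : atan_prim_neg b (X + d * IZR (Z.of_nat N) + d - d) = 0).
  { unfold atan_prim_neg. rewrite Rmin_right by lra. apply atan_prim_0. }
  assert (Hat := atan_prim_ge_PI2_inv b Kc Hb HK).
  assert (L1 : PI / (2 * b) - / Kc <= atan_prim_pos b (X + d * IZR (Z.of_nat N) + d)).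
  { unfold atan_prim_pos. rewrite Rmax_left by lra.
    eapply Rle_trans; [exact Hat | apply atan_prim_le; auto; lra]. }
  assert (L2 : atan_prim_neg b (X + d * IZR (- Z.of_nat N) - d) <= - (PI / (2 * b) - / Kc)).
  { unfold atan_prim_neg. rewrite Rmin_left by lra.
    eapply Rle_trans; [apply (atan_prim_le b _ (- Kc)); auto; lra|]. rewrite atan_prim_opp. lra. }
  replace (d * (PI / (d * b) - 2 / (d * Kc) - 2 / (b * b))) with
    ((PI / (2 * b) - / Kc) + (PI / (2 * b) - / Kc) - d / (b * b) * 2) by (field; lra).
  lra.
Qed.

Definition tail_inv_sqr T t := if Rlt_dec T (Rabs t) then / (t * t) else 0.

Lemma tail_inv_sqr_term_le T d t : 0 < d -> d < T ->
  d * tail_inv_sqr T t <= ((- / Rmax (t + d - d) (T - d)) - (- / Rmax (t - d) (T - d)))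
                 + (/ Rmax (- (t + d)) (T - d) - / Rmax (- t) (T - d)).
Proof.
  intros Hd HT. replace (t + d - d) with t by ring.
  assert (Hmono : forall u v, u <= v -> / Rmax v (T - d) <= / Rmax u (T - d)).
  { intros u v Huv. apply Rinv_le_contravar. unfold Rmax; destruct (Rle_dec u (T - d)); lra.
    unfold Rmax; destruct (Rle_dec u (T - d)); destruct (Rle_dec v (T - d)); lra. }
  assert (B1 := Hmono (t - d) t ltac:(lra)).
  assert (B2 := Hmono (- (t + d)) (- t) ltac:(lra)).
  unfold tail_inv_sqr. destruct (Rlt_dec T (Rabs t)) as [Ht|Ht].
  - destruct (Rle_dec 0 t) as [Hp|Hp].
    + rewrite Rabs_right in Ht by lra.
      rewrite (Rmax_left t) by lra. rewrite (Rmax_left (t - d)) by lra.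
      assert (d * / (t * t) <= / (t - d) - / t).
      { replace (/ (t - d) - / t) with (d * / (t * (t - d))) by (field; lra).
        apply Rmult_le_compat_l. lra. apply Rinv_le_contravar. nra. nra. }
      lra.
    + rewrite Rabs_left in Ht by lra.
      rewrite (Rmax_left (- t)) by lra. rewrite (Rmax_left (- (t + d))) by lra.
      assert (d * / (t * t) <= / (- (t + d)) - / (- t)).
      { replace (/ (- (t + d)) - / (- t)) with (d * / (t * (t + d))) by (field; lra).
        apply Rmult_le_compat_l. lra. apply Rinv_le_contravar. nra. nra. }
      lra.
  - lra.
Qed.

Lemma zsum_tail_inv_sqr_le T d X N : 0 < d -> d < T ->
  zsum N (fun n => tail_inv_sqr T (X + d * IZR n)) <= 2 / (d * (T - d)).
Proof.
  intros Hd HT. apply (Rmult_le_reg_l d); auto. rewrite <- zsum_scal.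
  eapply Rle_trans. apply zsum_le. intros k _. apply tail_inv_sqr_term_le; auto.
  rewrite zsum_add.
  assert (Hr : forall u, 0 < Rmax u (T - d))
    by (intros; unfold Rmax; destruct (Rle_dec u (T - d)); lra).
  assert (Hb : forall u, / Rmax u (T - d) <= / (T - d)).
  { intros u. apply Rinv_le_contravar. lra. apply Rmax_r. }
  assert (Hp : forall u, 0 <= / Rmax u (T - d)) by (intros; left; apply Rinv_0_lt_compat; auto).
  assert (H1 := zsum_telescope_affine_le X d N (fun u => - / Rmax (u - d) (T - d)) (- / (T - d)) 0).
  assert (H2 := zsum_telescope_affine_le X d N (fun u => / Rmax (- u) (T - d)) 0 (/ (T - d))).
  assert (X1 : forall u, - / (T - d) <= - / Rmax (u - d) (T - d) <= 0).
  { intros u. pose proof (Hb (u - d)). pose proof (Hp (u - d)). lra. }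
  assert (X2 : forall u, 0 <= / Rmax (- u) (T - d) <= / (T - d)).
  { intros u. pose proof (Hb (- u)). pose proof (Hp (- u)). lra. }
  specialize (H1 X1). specialize (H2 X2).
  replace (d * (2 / (d * (T - d)))) with (0 - - / (T - d) + (/ (T - d) - 0)) by (field; lra).
  lra.
Qed.

(** * Sums along a column: [sum_m |a1 + D m|^(-1-2s)] *)

Lemma zsum_telescope_col (a1 D : Z) N (K : R -> R) :
  zsum N (fun m => K (IZR (a1 + D * m) + IZR D) - K (IZR (a1 + D * m)))
  = K (IZR a1 + IZR D * INR N + IZR D) - K (IZR a1 - IZR D * INR N).
Proof.
  rewrite (zsum_ext N _ (fun m => K (IZR a1 + IZR D * IZR m + IZR D) - K (IZR a1 + IZR D * IZR m)))
    by (intros; rewrite plus_IZR, mult_IZR; reflexivity).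
  rewrite zsum_telescope_affine, opp_IZR, <- INR_IZR_INZ. f_equal. f_equal. ring.
Qed.

Lemma zsum_telescope_col_le (a1 D : Z) N (K : R -> R) lo hi : (forall u, lo <= K u <= hi) ->
  zsum N (fun m => K (IZR (a1 + D * m) + IZR D) - K (IZR (a1 + D * m))) <= hi - lo.
Proof.
  intros HK. rewrite zsum_telescope_col.
  pose proof (HK (IZR a1 + IZR D * INR N + IZR D)). pose proof (HK (IZR a1 - IZR D * INR N)). lra.
Qed.

(** Both bounds compare the terms with increments of [u^(-2s)] cut off below [c0], which
    telescope; one unit step absorbs the term(s) near the cutoff. *)
Definition cutoff_pow s c0 u := Rpower (Rmax u c0) (- 2 * s).

Lemma cutoff_pow_bound s c0 u : 0 < s -> 1 <= c0 -> 0 < cutoff_pow s c0 u <= 1.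
Proof.
  intros Hs Hc0. split; [apply Rpower_pos|].
  apply Rpower_le_1; [apply (Rle_trans _ c0), Rmax_r; lra | lra].
Qed.

Lemma cutoff_pow_anti s c0 u v : 0 < s -> 0 < c0 -> u <= v ->
  cutoff_pow s c0 v <= cutoff_pow s c0 u.
Proof.
  intros Hs Hc0 H. apply Rpower_le_nonpos; [|lra].
  unfold Rmax. destruct (Rle_dec u c0), (Rle_dec v c0); lra.
Qed.

Definition col_pos s (c : Z) := if Z_lt_dec 0 c then Rpower (IZR c) (-1 - 2 * s) else 0.

Lemma col_pos_term_le s (D c : Z) : 0 < s -> (1 <= D)%Z ->
  2 * s * IZR D * col_pos s c
  <= (- cutoff_pow s 1 (IZR c + IZR D - IZR D) - - cutoff_pow s 1 (IZR c - IZR D))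
     + 2 * s * IZR D * (step 0 (IZR c + IZR D - IZR D) - step 0 (IZR c - IZR D)).
Proof.
  intros Hs HD. replace (IZR c + IZR D - IZR D) with (IZR c) by ring.
  assert (HDr : 1 <= IZR D) by (apply IZR_le; lia).
  assert (Hm := cutoff_pow_anti s 1 (IZR c - IZR D) (IZR c) Hs ltac:(lra) ltac:(lra)).
  assert (Hq := step_le 0 (IZR c - IZR D) (IZR c) ltac:(lra)).
  assert (Hsd : 0 <= 2 * s * IZR D) by nra.
  assert (0 <= 2 * s * IZR D * (step 0 (IZR c) - step 0 (IZR c - IZR D)))
    by (apply Rmult_le_pos; lra).
  unfold col_pos. destruct (Z_lt_dec 0 c) as [Hc|Hc]; [|lra].
  destruct (Z_le_dec 1 (c - D)) as [H1|H1].
  - assert (1 <= IZR c - IZR D) by (rewrite <- minus_IZR; apply IZR_le; lia).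
    unfold cutoff_pow. rewrite !Rmax_left by lra.
    destruct (Rpower_diff_bounds s (IZR c - IZR D) (IZR c) Hs ltac:(lra)) as [P1 _].
    replace (IZR c - (IZR c - IZR D)) with (IZR D) in P1 by ring.
    lra.
  - assert (IZR c - IZR D <= 0) by (rewrite <- minus_IZR; apply IZR_le; lia).
    assert (1 <= IZR c) by (apply IZR_le; lia).
    assert (Q1 : step 0 (IZR c) = 1) by (unfold step; destruct (Rlt_dec 0 (IZR c)); lra).
    assert (Q2 : step 0 (IZR c - IZR D) = 0)
      by (unfold step; destruct (Rlt_dec 0 (IZR c - IZR D)); lra).
    assert (Rpower (IZR c) (-1 - 2 * s) <= 1) by (apply Rpower_le_1; lra).
    rewrite Q1, Q2. nra.
Qed.

Lemma zsum_col_pos_le s a1 D N : 0 < s -> (1 <= D)%Z ->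
  s * zsum N (fun m => col_pos s (a1 + D * m)) <= / (2 * IZR D) + s.
Proof.
  intros Hs HD. assert (HDr : 1 <= IZR D) by (apply IZR_le; lia).
  apply (Rmult_le_reg_l (2 * IZR D)); [lra|].
  replace (2 * IZR D * (s * zsum N (fun m => col_pos s (a1 + D * m))))
    with (zsum N (fun m => 2 * s * IZR D * col_pos s (a1 + D * m))) by (rewrite zsum_scal; ring).
  eapply Rle_trans; [apply zsum_le; intros m _; apply (col_pos_term_le s D (a1 + D * m)); auto|].
  rewrite zsum_add, zsum_scal.
  assert (H1 := zsum_telescope_col_le a1 D N (fun u => - cutoff_pow s 1 (u - IZR D)) (-1) 0
                  ltac:(intros u; pose proof (cutoff_pow_bound s 1 (u - IZR D) Hs ltac:(lra)); lra)).
  assert (H2 := zsum_telescope_col_le a1 D N (fun u => step 0 (u - IZR D)) 0 1 (fun u => step_bound _ _)).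
  cbv beta in H1, H2.
  assert (2 * s * IZR D * zsum N (fun m => step 0 (IZR (a1 + D * m) + IZR D - IZR D)
                                          - step 0 (IZR (a1 + D * m) - IZR D)) <= 2 * s * IZR D * 1)
    by (apply Rmult_le_compat_l; nra).
  replace (2 * IZR D * (/ (2 * IZR D) + s)) with (0 - -1 + 2 * s * IZR D * 1) by (field; lra).
  lra.
Qed.

Definition col_ge s c0 (c : Z) := if Rle_dec c0 (IZR c) then Rpower (IZR c) (-1 - 2 * s) else 0.

Lemma col_ge_term_ge s d c0 t : 0 < s -> 0 < d -> 1 <= c0 ->
  - (cutoff_pow s c0 (t + d) - cutoff_pow s c0 t)
  - (Rpower c0 (-2 * s) - Rpower (c0 + d) (-2 * s))
    * (step (c0 - d) (t + d - d) - step (c0 - d) (t - d))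
  <= 2 * s * d * (if Rle_dec c0 t then Rpower t (-1 - 2 * s) else 0).
Proof.
  intros Hs Hd Hc0. replace (t + d - d) with t by ring.
  assert (He : Rpower (c0 + d) (-2 * s) <= Rpower c0 (-2 * s)) by (apply Rpower_le_nonpos; lra).
  assert (Hq := step_le (c0 - d) (t - d) t ltac:(lra)).
  assert (0 <= (Rpower c0 (-2 * s) - Rpower (c0 + d) (-2 * s)) * (step (c0 - d) t - step (c0 - d) (t - d)))
    by (apply Rmult_le_pos; lra).
  unfold cutoff_pow. destruct (Rle_dec c0 t) as [H1|H1].
  - rewrite !Rmax_left by lra.
    destruct (Rpower_diff_bounds s t (t + d) Hs ltac:(lra)) as [_ P2].
    replace (t + d - t) with d in P2 by ring. nra.
  - rewrite (Rmax_right t c0) by lra.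
    destruct (Rle_dec (t + d) c0) as [H2|H2]; [rewrite (Rmax_right (t + d) c0) by lra; lra|].
    rewrite (Rmax_left (t + d) c0) by lra.
    assert (Q1 : step (c0 - d) t = 1) by (unfold step; destruct (Rlt_dec (c0 - d) t); lra).
    assert (Q2 : step (c0 - d) (t - d) = 0)
      by (unfold step; destruct (Rlt_dec (c0 - d) (t - d)); lra).
    rewrite Q1, Q2.
    assert (Rpower (c0 + d) (-2 * s) <= Rpower (t + d) (-2 * s)) by (apply Rpower_le_nonpos; lra).
    lra.
Qed.

Lemma zsum_col_ge_ge s a1 D N c0 : 0 < s -> (1 <= D)%Z -> 1 <= c0 ->
  IZR a1 - IZR D * INR N <= c0 -> c0 <= IZR a1 + IZR D * INR N + IZR D ->
  (Rpower (c0 + IZR D) (- 2 * s) - Rpower (IZR a1 + IZR D * INR N + IZR D) (- 2 * s)) / (2 * IZR D)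
  <= s * zsum N (fun m => col_ge s c0 (a1 + D * m)).
Proof.
  intros Hs HD Hc0 H1 H2. assert (HDr : 1 <= IZR D) by (apply IZR_le; lia).
  apply (Rmult_le_reg_l (2 * IZR D)); [lra|].
  replace (2 * IZR D * (s * zsum N (fun m => col_ge s c0 (a1 + D * m))))
    with (zsum N (fun m => 2 * s * IZR D * col_ge s c0 (a1 + D * m))) by (rewrite zsum_scal; ring).
  set (e := Rpower c0 (-2 * s) - Rpower (c0 + IZR D) (-2 * s)).
  assert (He : 0 <= e) by (unfold e; assert (Rpower (c0 + IZR D) (-2 * s) <= Rpower c0 (-2 * s))
                             by (apply Rpower_le_nonpos; lra); lra).
  eapply Rle_trans.
  2:{ apply zsum_le. intros m _. unfold col_ge. apply (col_ge_term_ge s (IZR D) c0); lra. }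
  fold e. rewrite zsum_sub, zsum_scal.
  rewrite (zsum_ext N _ (fun m => -1 * (cutoff_pow s c0 (IZR (a1 + D * m) + IZR D)
                                        - cutoff_pow s c0 (IZR (a1 + D * m))))) by (intros; ring).
  rewrite zsum_scal, (zsum_telescope_col a1 D N (cutoff_pow s c0)).
  assert (H3 := zsum_telescope_col_le a1 D N (fun u => step (c0 - IZR D) (u - IZR D)) 0 1
                  (fun u => step_bound _ _)).
  cbv beta in H3.
  assert (e * zsum N (fun m => step (c0 - IZR D) (IZR (a1 + D * m) + IZR D - IZR D)
                              - step (c0 - IZR D) (IZR (a1 + D * m) - IZR D)) <= e * 1)
    by (apply Rmult_le_compat_l; lra).
  unfold cutoff_pow. rewrite (Rmax_right (IZR a1 - IZR D * INR N)), (Rmax_left (_ + _ + _)) by lra.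
  replace (2 * IZR D * ((Rpower (c0 + IZR D) (-2 * s)
                         - Rpower (IZR a1 + IZR D * INR N + IZR D) (-2 * s)) / (2 * IZR D)))
    with (Rpower (c0 + IZR D) (-2 * s) - Rpower (IZR a1 + IZR D * INR N + IZR D) (-2 * s))
      by (field; lra).
  unfold e in *. lra.
Qed.

Definition col_inv_sqr (c : Z) := if Z.eq_dec c 0 then 0 else / (IZR c * IZR c).

Lemma col_inv_sqr_split c : col_inv_sqr c = col_pos (/2) c + col_pos (/2) (- c).
Proof.
  unfold col_inv_sqr, col_pos. replace (-1 - 2 * / 2) with (-2) by field.
  destruct (Z.eq_dec c 0) as [->|H].
  - simpl. destruct (Z_lt_dec 0 0); [lia|]. ring.
  - destruct (Z_lt_dec 0 c); destruct (Z_lt_dec 0 (- c)); try lia.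
    + rewrite Rpower_m2. ring. apply IZR_lt; auto.
    + rewrite Rpower_m2. rewrite opp_IZR. field. apply not_0_IZR; auto. rewrite opp_IZR.
      assert (IZR c < 0) by (apply IZR_lt; lia). lra.
Qed.

Lemma zsum_opp_affine N (f : Z -> R) a1 D :
  zsum N (fun m => f (- (a1 + D * m))%Z) = zsum N (fun m => f (- a1 + D * m)%Z).
Proof.
  rewrite zsum_reflect. apply zsum_ext. intros k _. f_equal. ring.
Qed.

Lemma zsum_col_pos_pair_le s a1 D N : 0 < s -> (1 <= D)%Z ->
  s * zsum N (fun m => col_pos s (a1 + D * m) + col_pos s (- (a1 + D * m))) <= / IZR D + 2 * s.
Proof.
  intros Hs HD. assert (HDr : 1 <= IZR D) by (apply IZR_le; lia).
  rewrite zsum_add, (zsum_opp_affine N (col_pos s)), Rmult_plus_distr_l.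
  pose proof (zsum_col_pos_le s a1 D N Hs HD). pose proof (zsum_col_pos_le s (- a1) D N Hs HD).
  replace (/ IZR D) with (/ (2 * IZR D) + / (2 * IZR D)) by (field; lra). lra.
Qed.

Lemma zsum_col_inv_sqr_le a1 D N : (1 <= D)%Z -> zsum N (fun m => col_inv_sqr (a1 + D * m)) <= 4.
Proof.
  intros HD. assert (HDr : 1 <= IZR D) by (apply IZR_le; lia).
  rewrite (zsum_ext N _ (fun m => col_pos (/2) (a1 + D * m) + col_pos (/2) (- (a1 + D * m))))
    by (intros; apply col_inv_sqr_split).
  pose proof (zsum_col_pos_pair_le (/2) a1 D N ltac:(lra) HD).
  assert (/ IZR D <= 1) by (rewrite <- Rinv_1; apply Rinv_le_contravar; lra).
  lra.
Qed.

Lemma zsum_col_inv_sqr_ge0 a1 D N : 0 <= zsum N (fun m => col_inv_sqr (a1 + D * m)).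
Proof.
  apply zsum_ge0. intros m. unfold col_inv_sqr. destruct (Z.eq_dec _ 0); [lra|].
  apply Rlt_le, Rinv_0_lt_compat, Rsqr_pos_lt, not_0_IZR; auto.
Qed.

Lemma col_ge_pair_small s c0 c : ~ c0 <= Rabs (IZR c) -> col_ge s c0 c + col_ge s c0 (- c) = 0.
Proof.
  intros Hc. pose proof (Rle_abs (IZR c)). pose proof (Rle_abs (- IZR c)). rewrite Rabs_Ropp in *.
  unfold col_ge. rewrite opp_IZR. destruct (Rle_dec c0 (IZR c)), (Rle_dec c0 (- IZR c)); lra.
Qed.

Lemma col_ge_pair s c0 c : 0 < c0 -> c0 <= Rabs (IZR c) ->
  col_ge s c0 c + col_ge s c0 (- c) = Rpower (Rabs (IZR c)) (-1 - 2 * s).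
Proof.
  intros Hc0 Hc. unfold col_ge. rewrite opp_IZR.
  destruct (Rle_dec c0 (IZR c)), (Rle_dec c0 (- IZR c)); try lra.
  - rewrite Rabs_right by lra. ring.
  - rewrite Rabs_left by lra. ring.
  - exfalso. unfold Rabs in Hc. destruct (Rcase_abs (IZR c)); lra.
Qed.

Lemma zsum_col_ge_pair_ge s a1 D c0 e : 0 < s -> (1 <= D)%Z -> 1 <= c0 -> 0 < e ->
  exists M : nat, (Rpower (c0 + IZR D) (- 2 * s) - e) / IZR D
    <= s * zsum M (fun m => col_ge s c0 (a1 + D * m) + col_ge s c0 (- (a1 + D * m))).
Proof.
  intros Hs HD Hc0 He. assert (HDr : 1 <= IZR D) by (apply IZR_le; lia).
  destruct (Rpower_small (2 * s) e ltac:(lra) He) as [B [HB HBu]].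
  destruct (INR_unbounded (B + c0 + Rabs (IZR a1))) as [M HM].
  exists M. rewrite zsum_add, (zsum_opp_affine M (col_ge s c0)), Rmult_plus_distr_l.
  assert (HDM : INR M <= IZR D * INR M) by (pose proof (pos_INR M); nra).
  assert (Hw : forall b, Rabs (IZR b) <= Rabs (IZR a1) ->
    (Rpower (c0 + IZR D) (- 2 * s) - e) / (2 * IZR D)
      <= s * zsum M (fun m => col_ge s c0 (b + D * m))).
  { intros b Hb. pose proof (Rle_abs (IZR b)). pose proof (Rle_abs (- IZR b)).
    rewrite Rabs_Ropp in *.
    eapply Rle_trans; [|apply zsum_col_ge_ge; auto; lra].
    apply Rmult_le_compat_r; [apply Rlt_le, Rinv_0_lt_compat; lra|].
    assert (Rpower (IZR b + IZR D * INR M + IZR D) (- (2 * s)) < e) by (apply HBu; lra).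
    replace (- 2 * s) with (- (2 * s)) by ring. lra. }
  replace ((Rpower (c0 + IZR D) (- 2 * s) - e) / IZR D) with
    ((Rpower (c0 + IZR D) (- 2 * s) - e) / (2 * IZR D) + (Rpower (c0 + IZR D) (- 2 * s) - e) / (2 * IZR D))
    by (field; lra).
  apply Rplus_le_compat; apply Hw; [lra | rewrite opp_IZR, Rabs_Ropp; lra].
Qed.

Lemma Rpower_Rabs_IZR_split s c : (c <> 0)%Z ->
  Rpower (Rabs (IZR c)) (-1 - 2 * s) = col_pos s c + col_pos s (- c).
Proof.
  intros H. unfold col_pos. destruct (Z_lt_dec 0 c); destruct (Z_lt_dec 0 (- c)); try lia.
  - rewrite Rabs_right. ring. apply Rle_ge. apply IZR_le; lia.
  - rewrite Rabs_left. rewrite opp_IZR. ring. apply IZR_lt; lia.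
Qed.

(** * The lattice [w(m,n) = lat_re + i lat_im], with [z = x + i y] *)

Definition lat_re (x : R) (a1 a2 D m n : Z) := x * IZR (a1 + D * m) + IZR (a2 + D * n).

Definition lat_im (y : R) (a1 D m : Z) := y * IZR (a1 + D * m).

Lemma lat_pt_pair x y a1 a2 D m n :
  lat_pt (x, y) a1 a2 D m n = (lat_re x a1 a2 D m n, lat_im y a1 D m).
Proof. unfold lat_pt, lat_re, lat_im, Cplus, Cmult, RtoC. simpl. f_equal; ring. Qed.

Lemma lat_im_neq0 y a1 D m : 0 < y -> (a1 + D * m)%Z <> 0%Z -> lat_im y a1 D m <> 0.
Proof.
  intros Hy Hc. unfold lat_im. apply Rmult_integral_contrapositive. split. lra.
  apply not_0_IZR; auto.
Qed.

Lemma lat_re_row x a1 a2 D m n : lat_re x a1 a2 D m n = (x * IZR (a1 + D * m) + IZR a2)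
  + IZR D * IZR n.
Proof. unfold lat_re. rewrite (plus_IZR a2), mult_IZR. ring. Qed.

Lemma lat_im_ge y a1 D m : 0 < y -> (a1 + D * m)%Z <> 0%Z -> y <= Rabs (lat_im y a1 D m).
Proof.
  intros Hy H. unfold lat_im. rewrite Rabs_mult, (Rabs_right y) by lra.
  pose proof (Rabs_IZR_ge_1 _ H). nra.
Qed.

Lemma norm2_lattice_lower x y c d : 0 < y ->
  y * y / (x * x + y * y) * (d * d) <= norm2 (x * c + d) (y * c).
Proof.
  intros Hy. unfold norm2.
  assert (H : 0 < x * x + y * y) by (pose proof (Rle_0_sqr x); unfold Rsqr in H; nra).
  apply (Rmult_le_reg_l (x * x + y * y)); auto.
  replace ((x * x + y * y) * (y * y / (x * x + y * y) * (d * d)))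
    with (y * y * (d * d)) by (field; lra).
  pose proof (Rle_0_sqr (x * (x * c + d) + y * (y * c))). unfold Rsqr in H0. nra.
Qed.

Definition defect_dom x y a1 a2 D m n := if Z.eq_dec (a1 + D * m) 0 then 0 else
  defect_const y (IZR D) / (Rabs (lat_im y a1 D m) * norm2 (lat_re x a1 a2 D m n) (lat_im y a1 D m)).

Lemma defect_const_pos y d : 0 < y -> 0 < d -> 0 < defect_const y d.
Proof.
  intros Hy Hd. unfold defect_const. assert (0 < / (y * y)) by (apply Rinv_0_lt_compat; nra).
  apply Rdiv_lt_0_compat; [|nra]. repeat apply Rmult_lt_0_compat; nra.
Qed.

Lemma zsum_inv_norm2_row_le x a1 a2 D m N Y : Y <> 0 -> (1 <= D)%Z ->
  zsum N (fun n => / norm2 (lat_re x a1 a2 D m n) Y) <= PI / (IZR D * Rabs Y) + 2 / (Y * Y).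
Proof.
  intros HY HD. assert (Hb : 0 < Rabs Y) by (apply Rabs_pos_lt; auto).
  set (X := x * IZR (a1 + D * m) + IZR a2).
  rewrite (zsum_ext N _ (fun n => / (Rabs Y * Rabs Y + (X + IZR D * IZR n) * (X + IZR D * IZR n))))
    by (intros; rewrite lat_re_row, Rabs_mul_self; fold X; unfold norm2; f_equal; ring).
  rewrite <- (Rabs_mul_self Y). apply zsum_lorentz_le; auto. apply IZR_lt; lia.
Qed.

Definition defect_dom_total y d := 4 * defect_const y d * (PI / d + 2 / y) / (y * y).

Lemma zsum_defect_dom_row_le x y a1 a2 D m N : 0 < y -> (1 <= D)%Z ->
  zsum N (fun n => defect_dom x y a1 a2 D m n)
  <= defect_const y (IZR D) * (PI / IZR D + 2 / y) / (y * y) * col_inv_sqr (a1 + D * m).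
Proof.
  intros Hy HD. assert (HDr : 1 <= IZR D) by (apply IZR_le; lia).
  assert (HK := defect_const_pos y (IZR D) Hy ltac:(lra)).
  unfold defect_dom, col_inv_sqr. destruct (Z.eq_dec (a1 + D * m) 0) as [H|H].
  { rewrite zsum0. lra. }
  assert (HY := lat_im_neq0 y a1 D m Hy H). assert (HyY := lat_im_ge y a1 D m Hy H).
  set (Y := lat_im y a1 D m) in *. set (c := IZR (a1 + D * m)) in *.
  assert (Hb : 0 < Rabs Y) by lra.
  rewrite (zsum_ext N _ (fun n => defect_const y (IZR D) / Rabs Y * / norm2 (lat_re x a1 a2 D m n) Y)).
  2:{ intros. field. split; [apply Rgt_not_eq, norm2_pos; auto | lra]. }
  rewrite zsum_scal.
  eapply Rle_trans.
  { apply Rmult_le_compat_l; [apply Rlt_le, Rdiv_lt_0_compat; auto|].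
    apply zsum_inv_norm2_row_le; auto. }
  assert (EY : Y * Y = (y * y) * (c * c)) by (unfold Y, c, lat_im; ring).
  assert (Hcc : 1 <= c * c).
  { pose proof (Rabs_IZR_ge_1 _ H). fold c in H0. rewrite <- Rabs_mul_self. nra. }
  replace (defect_const y (IZR D) / Rabs Y * (PI / (IZR D * Rabs Y) + 2 / (Y * Y)))
    with (defect_const y (IZR D) * (PI / IZR D + 2 / Rabs Y) / (Y * Y))
    by (rewrite <- (Rabs_mul_self Y); field; lra).
  rewrite EY. unfold Rdiv.
  replace (defect_const y (IZR D) * (PI * / IZR D + 2 * / y) * / (y * y) * / (c * c))
    with (defect_const y (IZR D) * (PI * / IZR D + 2 * / y) * / (y * y * (c * c)))
      by (field; split; nra).
  apply Rmult_le_compat_r; [apply Rlt_le, Rinv_0_lt_compat; nra|].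
  apply Rmult_le_compat_l; [lra|]. apply Rplus_le_compat_l, Rmult_le_compat_l; [lra|].
  apply Rinv_le_contravar; lra.
Qed.

Lemma zsum2_defect_dom_le x y a1 a2 D N : 0 < y -> (1 <= D)%Z ->
  zsum2 N (defect_dom x y a1 a2 D) <= defect_dom_total y (IZR D).
Proof.
  intros Hy HD. assert (HDr : 1 <= IZR D) by (apply IZR_le; lia).
  set (K := defect_const y (IZR D) * (PI / IZR D + 2 / y) / (y * y)).
  assert (HK : 0 <= K).
  { pose proof (defect_const_pos y (IZR D) Hy ltac:(lra)). pose proof PI_RGT_0.
    unfold K. apply Rmult_le_pos; [apply Rmult_le_pos|]; [lra| |].
    - apply Rplus_le_le_0_compat; apply Rlt_le, Rdiv_lt_0_compat; lra.
    - apply Rlt_le, Rinv_0_lt_compat; nra. }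
  apply (Rle_trans _ (zsum N (fun m => K * col_inv_sqr (a1 + D * m)))).
  - apply zsum_le. intros m _. apply zsum_defect_dom_row_le; auto.
  - rewrite zsum_scal. unfold defect_dom_total.
    replace (4 * defect_const y (IZR D) * (PI / IZR D + 2 / y) / (y * y)) with (K * 4)
      by (unfold K; field; lra).
    apply Rmult_le_compat_l; auto. apply zsum_col_inv_sqr_le; auto.
Qed.

Lemma defect_dom_total_le d : 1 <= d -> exists K, 0 < K /\ forall y, 1 <= y ->
  defect_dom_total y d <= K / y.
Proof.
  intros Hd. exists (4 * (112 * d * 2 * (1 + d * d)) * (PI + 2)). split.
  { assert (0 < PI) by apply PI_RGT_0. apply Rmult_lt_0_compat; [|lra]. nra. }
  intros y Hy. unfold defect_dom_total, defect_const.
  assert (HPI : 0 < PI) by apply PI_RGT_0.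
  assert (Hiy : / (y * y) <= 1) by (rewrite <- Rinv_1; apply Rinv_le_contravar; nra).
  assert (Hiy0 : 0 < / (y * y)) by (apply Rinv_0_lt_compat; nra).
  assert (HK1 : 112 * d * (1 + / (y * y)) * (y * y + d * d) / (y * y) <= 112 * d * 2 * (1 + d * d)).
  { replace (112 * d * (1 + / (y * y)) * (y * y + d * d) / (y * y))
      with (112 * d * (1 + / (y * y)) * (1 + d * d * / (y * y))) by (field; nra).
    assert (d * d * / (y * y) <= d * d)
      by (rewrite <- (Rmult_1_r (d * d)) at 2; apply Rmult_le_compat_l; nra).
    apply Rmult_le_compat. nra. nra. nra. lra. }
  assert (HK0 : 0 <= 112 * d * (1 + / (y * y)) * (y * y + d * d) / (y * y)).
  { apply Rmult_le_pos. apply Rmult_le_pos. nra. nra. lra. }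
  assert (Hp : PI / d + 2 / y <= PI + 2).
  { assert (PI / d <= PI). { apply (Rmult_le_reg_r d). lra.
    replace (PI / d * d) with PI by (field; lra). nra. }
    assert (2 / y <= 2).
    { apply (Rmult_le_reg_r y). lra. replace (2 / y * y) with 2 by (field; lra). nra. } lra. }
  assert (Hp0 : 0 <= PI / d + 2 / y).
  { apply Rplus_le_le_0_compat; apply Rlt_le, Rdiv_lt_0_compat; lra. }
  apply (Rle_trans _ (4 * (112 * d * 2 * (1 + d * d)) * (PI + 2) / (y * y))).
  - unfold Rdiv. apply Rmult_le_compat_r. lra. apply Rmult_le_compat; try nra.
  - unfold Rdiv. apply Rmult_le_compat_l. apply Rlt_le. apply Rmult_lt_0_compat; [|lra]. nra.
    apply Rinv_le_contravar; nra.
Qed.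

Lemma norm2_lat_boundary_ge x y a1 a2 D m n (N : nat) : 0 < y -> (1 <= D)%Z ->
  2 * Rabs (IZR a2) + 1 <= INR N -> (n = Z.of_nat N + 1 \/ n = - Z.of_nat N)%Z ->
  y * y / (x * x + y * y) * (INR N / 2 * (INR N / 2))
  <= norm2 (lat_re x a1 a2 D m n) (lat_im y a1 D m).
Proof.
  intros Hy HD Ha2 Hn. assert (HDr : 1 <= IZR D) by (apply IZR_le; lia).
  unfold lat_re, lat_im. eapply Rle_trans; [|apply norm2_lattice_lower; auto].
  apply Rmult_le_compat_l;
    [apply Rlt_le, Rdiv_lt_0_compat; pose proof (Rle_0_sqr x); unfold Rsqr in *; nra|].
  assert (HN : 1 <= INR N) by (pose proof (Rabs_pos (IZR a2)); lra).
  assert (He : INR N / 2 <= Rabs (IZR (a2 + D * n))).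
  { rewrite plus_IZR, mult_IZR. destruct Hn as [-> | ->].
    - rewrite plus_IZR, <- INR_IZR_INZ. simpl.
      pose proof (Rabs_triang_inv (IZR D * (INR N + 1)) (- IZR a2)) as H.
      rewrite Rabs_Ropp in H.
      replace (IZR D * (INR N + 1) - - IZR a2) with (IZR a2 + IZR D * (INR N + 1)) in H by ring.
      assert (IZR D * (INR N + 1) >= INR N + 1) by nra.
      rewrite Rabs_right in H by lra. lra.
    - rewrite opp_IZR, <- INR_IZR_INZ.
      pose proof (Rabs_triang_inv (IZR D * INR N) (IZR a2)) as H.
      replace (IZR a2 + IZR D * - INR N) with (- (IZR D * INR N - IZR a2)) by ring.
      assert (IZR D * INR N >= INR N) by nra.
      rewrite Rabs_Ropp. rewrite Rabs_right in H by lra. lra. }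
  rewrite <- (Rabs_mul_self (IZR (a2 + D * n))).
  apply Rmult_le_compat; lra.
Qed.

(** * Taylor defects along the rows *)

(** The summand is [der] of an explicit [prim] (see [prim_re], [prim_im]); along a row the
    sum of [der] is the telescoping sum of the difference quotients of [prim] plus the
    Taylor defects, which are summable uniformly in [s]. *)
Section TaylorDefect.

Variables prim der der2 : R -> R -> R -> R.

Hypothesis is_derive_prim : forall s Y t, Y <> 0 -> is_derive (prim s Y) t (der s Y t).
Hypothesis is_derive_der : forall s Y t, Y <> 0 -> is_derive (der s Y) t (der2 s Y t).
Hypothesis der2_le : forall s Y t, 0 <= s <= 1 -> Y <> 0 ->
  Rabs (der2 s Y t) <= 28 * norm2_pow t Y (- s) / (Rabs Y * norm2 t Y).
Hypothesis prim_le : forall s Y t, Y <> 0 -> Rabs (prim s Y t) <= norm2_pow t Y (- / 2 - s).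
Hypothesis filterlim_prim : forall Y t,
  filterlim (fun s => prim s Y t) (at_right 0) (locally (prim 0 Y t)).
Hypothesis filterlim_der : forall Y t,
  filterlim (fun s => der s Y t) (at_right 0) (locally (der 0 Y t)).

Definition lattice_diff s x y a1 a2 D m n :=
  if Z.eq_dec (a1 + D * m) 0 then 0 else
  (prim s (lat_im y a1 D m) (lat_re x a1 a2 D m n + IZR D)
   - prim s (lat_im y a1 D m) (lat_re x a1 a2 D m n)) / IZR D.

Definition lattice_defect s x y a1 a2 D m n :=
  if Z.eq_dec (a1 + D * m) 0 then 0 else
  der s (lat_im y a1 D m) (lat_re x a1 a2 D m n) - lattice_diff s x y a1 a2 D m n.

Definition defect_sum s x y a1 a2 D := lim_real (fun N => zsum2 N (lattice_defect s x y a1 a2 D)).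

Lemma lattice_defect_le s x y a1 a2 D m n : 0 <= s <= 1 -> 0 < y -> (1 <= D)%Z ->
  Rabs (lattice_defect s x y a1 a2 D m n) <= defect_dom x y a1 a2 D m n.
Proof.
  intros Hs Hy HD. unfold lattice_defect, lattice_diff, defect_dom.
  destruct (Z.eq_dec (a1 + D * m) 0) as [|Hc]; [rewrite Rabs_R0; lra|].
  assert (HY := lat_im_neq0 y a1 D m Hy Hc).
  apply (defect_bound _ _ (der2 s (lat_im y a1 D m)) s); auto.
  - apply lat_im_ge; auto.
  - apply IZR_lt; lia.
Qed.

Lemma filterlim_lattice_defect x y a1 a2 D m n :
  filterlim (fun s => lattice_defect s x y a1 a2 D m n) (at_right 0)
    (locally (lattice_defect 0 x y a1 a2 D m n)).
Proof.
  unfold lattice_defect, lattice_diff. destruct (Z.eq_dec (a1 + D * m) 0).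
  { apply filterlim_const. }
  apply (filterlim_Rminus (at_right 0)); [apply filterlim_der|].
  apply (filterlim_Rmult (at_right 0)); [|apply filterlim_const].
  apply (filterlim_Rminus (at_right 0)); apply filterlim_prim.
Qed.

Lemma is_lim_seq_defect_sum s x y a1 a2 D : 0 <= s <= 1 -> 0 < y -> (1 <= D)%Z ->
  is_lim_seq (fun N => zsum2 N (lattice_defect s x y a1 a2 D)) (defect_sum s x y a1 a2 D).
Proof.
  intros Hs Hy HD.
  destruct (zsum2_dominated (lattice_defect s x y a1 a2 D) (defect_dom x y a1 a2 D)
              (defect_dom_total y (IZR D))) as [_ [H _]].
  - intros; apply lattice_defect_le; auto.
  - intros; apply zsum2_defect_dom_le; auto.
  - apply is_lim_seq_lim_real, H.
Qed.

Lemma filterlim_defect_sum x y a1 a2 D : 0 < y -> (1 <= D)%Z ->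
  filterlim (fun s => defect_sum s x y a1 a2 D) (at_right 0) (locally (defect_sum 0 x y a1 a2 D)).
Proof.
  intros Hy HD.
  apply (zsum2_dominated_convergence _ (fun s => lattice_defect s x y a1 a2 D) _
           (defect_dom x y a1 a2 D) (defect_dom_total y (IZR D))).
  - apply (at_right_0_interval _ 1); [lra|]. intros s Hs m n. apply lattice_defect_le; auto; lra.
  - intros m n. apply lattice_defect_le; auto; lra.
  - intros N. apply zsum2_defect_dom_le; auto.
  - intros m n. apply filterlim_lattice_defect.
Qed.

Lemma defect_sum_le x y a1 a2 D : 0 < y -> (1 <= D)%Z ->
  Rabs (defect_sum 0 x y a1 a2 D) <= defect_dom_total y (IZR D).
Proof.
  intros Hy HD.
  apply (is_lim_seq_le_R (fun N => Rabs (zsum2 N (lattice_defect 0 x y a1 a2 D)))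
                         (fun _ => defect_dom_total y (IZR D))).
  - intros N. eapply Rle_trans; [apply zsum2_abs|].
    eapply Rle_trans; [apply zsum2_le; intros; apply lattice_defect_le; auto; lra|].
    apply zsum2_defect_dom_le; auto.
  - apply (is_lim_seq_abs _ (defect_sum 0 x y a1 a2 D)), is_lim_seq_defect_sum; auto; lra.
  - apply is_lim_seq_const.
Qed.

Lemma zsum2_lattice_diff s x y a1 a2 D N : (1 <= D)%Z ->
  zsum2 N (lattice_diff s x y a1 a2 D) =
  zsum N (fun m => if Z.eq_dec (a1 + D * m) 0 then 0 else
    (prim s (lat_im y a1 D m) (lat_re x a1 a2 D m (Z.of_nat N + 1))
     - prim s (lat_im y a1 D m) (lat_re x a1 a2 D m (- Z.of_nat N))) / IZR D).
Proof.
  intros HD. assert (HDr : 1 <= IZR D) by (apply IZR_le; lia).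
  apply zsum_ext. intros m _. unfold lattice_diff. destruct (Z.eq_dec (a1 + D * m) 0).
  { apply zsum0. }
  set (X := x * IZR (a1 + D * m) + IZR a2).
  rewrite (zsum_ext N _ (fun n => / IZR D * (prim s (lat_im y a1 D m) (X + IZR D * IZR n + IZR D)
                                          - prim s (lat_im y a1 D m) (X + IZR D * IZR n)))).
  2:{ intros k _. rewrite lat_re_row. fold X. field. lra. }
  rewrite zsum_scal, zsum_telescope_affine, !lat_re_row, (plus_IZR (Z.of_nat N) 1).
  fold X.
  replace (X + IZR D * (IZR (Z.of_nat N) + IZR 1)) with (X + IZR D * IZR (Z.of_nat N) + IZR D)
    by (simpl; ring).
  field. lra.
Qed.

(** For [N >= 2 |a2| + 1] the two boundary columns satisfy [|w| >= c N], so each of the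
    [2N+1] boundary terms is [O(N^(-1-2s))]. *)
Lemma prim_lat_boundary_le s x y a1 a2 D m n (N : nat) : 0 <= s -> 0 < y -> (1 <= D)%Z ->
  1 <= INR N -> 2 * Rabs (IZR a2) + 1 <= INR N ->
  (n = Z.of_nat N + 1 \/ n = - Z.of_nat N)%Z -> (a1 + D * m)%Z <> 0%Z ->
  Rabs (prim s (lat_im y a1 D m) (lat_re x a1 a2 D m n))
  <= Rpower (y * y / (x * x + y * y) / 4) (- / 2 - s) * (Rpower (INR N) (- (2 * s)) / INR N).
Proof.
  intros Hs Hy HD HN Ha2 Hn Hc.
  set (mu := y * y / (x * x + y * y)).
  assert (Hmu : 0 < mu)
    by (unfold mu; pose proof (Rle_0_sqr x); unfold Rsqr in *; apply Rdiv_lt_0_compat; nra).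
  eapply Rle_trans; [apply prim_le, lat_im_neq0; auto|].
  eapply Rle_trans; [apply Rpower_le_nonpos; [|lra]|].
  - split; [|apply (norm2_lat_boundary_ge x y a1 a2 D m n N); auto]. fold mu.
    apply Rmult_lt_0_compat; nra.
  - right. fold mu.
    replace (mu * (INR N / 2 * (INR N / 2))) with (mu / 4 * (INR N * INR N)) by field.
    rewrite <- Rpower_mult_distr, Rpower_sqr by (try apply Rmult_lt_0_compat; lra).
    replace (2 * (- / 2 - s)) with (-1 + - (2 * s)) by field.
    rewrite Rpower_plus, Rpower_m1 by lra. field. lra.
Qed.

Lemma zsum2_lattice_diff_le s x y a1 a2 D (N : nat) : 0 <= s -> 0 < y -> (1 <= D)%Z ->
  1 <= INR N -> 2 * Rabs (IZR a2) + 1 <= INR N ->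
  Rabs (zsum2 N (lattice_diff s x y a1 a2 D))
  <= 6 * Rpower (y * y / (x * x + y * y) / 4) (- / 2 - s) * Rpower (INR N) (- (2 * s)) / IZR D.
Proof.
  intros Hs Hy HD HN Ha2. assert (HDr : 1 <= IZR D) by (apply IZR_le; lia).
  set (C := Rpower (y * y / (x * x + y * y) / 4) (- / 2 - s)).
  set (bN := C * (Rpower (INR N) (- (2 * s)) / INR N)).
  assert (HC : 0 < C) by apply Rpower_pos.
  assert (HRp := Rpower_pos (INR N) (- (2 * s))).
  assert (HbN : 0 < bN) by (apply Rmult_lt_0_compat; [|apply Rdiv_lt_0_compat]; lra).
  rewrite zsum2_lattice_diff by auto.
  eapply Rle_trans; [apply zsum_abs|].
  apply (Rle_trans _ (zsum N (fun _ => 2 * bN / IZR D))).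
  - apply zsum_le. intros m _. destruct (Z.eq_dec (a1 + D * m) 0) as [H|H].
    + rewrite Rabs_R0. apply Rlt_le, Rdiv_lt_0_compat; lra.
    + unfold Rdiv.
      rewrite Rabs_mult, (Rabs_right (/ IZR D)) by (apply Rle_ge, Rlt_le, Rinv_0_lt_compat; lra).
      apply Rmult_le_compat_r; [apply Rlt_le, Rinv_0_lt_compat; lra|].
      eapply Rle_trans; [apply Rabs_triang|]. rewrite Rabs_Ropp.
      pose proof (prim_lat_boundary_le s x y a1 a2 D m _ N Hs Hy HD HN Ha2 (or_introl eq_refl) H) as Hb1.
      pose proof (prim_lat_boundary_le s x y a1 a2 D m _ N Hs Hy HD HN Ha2 (or_intror eq_refl) H) as Hb2.
      fold C bN in Hb1, Hb2. lra.
  - rewrite zsum_const. unfold bN.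
    apply (Rmult_le_reg_r (INR N * IZR D)); [nra|].
    replace ((2 * INR N + 1) * (2 * (C * (Rpower (INR N) (- (2 * s)) / INR N)) / IZR D) * (INR N * IZR D))
      with ((2 * INR N + 1) * (2 * C * Rpower (INR N) (- (2 * s)))) by (field; lra).
    replace (6 * C * Rpower (INR N) (- (2 * s)) / IZR D * (INR N * IZR D))
      with (3 * INR N * (2 * C * Rpower (INR N) (- (2 * s)))) by (field; lra).
    apply Rmult_le_compat_r; nra.
Qed.

Lemma is_lim_seq_lattice_diff_0 s x y a1 a2 D : 0 < s -> 0 < y -> (1 <= D)%Z ->
  is_lim_seq (fun N => zsum2 N (lattice_diff s x y a1 a2 D)) 0.
Proof.
  intros Hs Hy HD. assert (HDr : 1 <= IZR D) by (apply IZR_le; lia).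
  set (C := Rpower (y * y / (x * x + y * y) / 4) (- / 2 - s)).
  assert (HC : 0 < C) by apply Rpower_pos.
  apply is_lim_seq_spec. intros eps.
  destruct (Rpower_INR_small (2 * s) (eps * IZR D / (6 * C))) as [N0 HN0]; [lra| |].
  { apply Rdiv_lt_0_compat; [apply Rmult_lt_0_compat; [apply cond_pos | lra] | lra]. }
  exists (N0 + 2 * Z.to_nat (Z.abs a2) + 1)%nat. intros N HN.
  assert (HNr : 1 <= INR N) by (apply (le_INR 1); lia).
  assert (Ha2 : 2 * Rabs (IZR a2) + 1 <= INR N).
  { rewrite <- abs_IZR, <- (Z2Nat.id (Z.abs a2)), <- INR_IZR_INZ by lia.
    assert (INR (2 * Z.to_nat (Z.abs a2) + 1) <= INR N) by (apply le_INR; lia).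
    rewrite plus_INR, mult_INR in H. simpl in H. lra. }
  rewrite Rminus_0_r. eapply Rle_lt_trans; [apply zsum2_lattice_diff_le; auto; lra|]. fold C.
  apply (Rmult_lt_reg_r (IZR D / (6 * C))); [apply Rdiv_lt_0_compat; lra|].
  replace (6 * C * Rpower (INR N) (- (2 * s)) / IZR D * (IZR D / (6 * C)))
    with (Rpower (INR N) (- (2 * s))) by (field; lra).
  replace (eps * (IZR D / (6 * C))) with (eps * IZR D / (6 * C)) by (field; lra).
  apply HN0. lia.
Qed.

End TaylorDefect.

Lemma norm2_pow_half t Y : Y <> 0 -> Rabs t <= norm2_pow t Y (/ 2) /\ Rabs Y <= norm2_pow t Y (/ 2).
Proof.
  intros HY. unfold norm2_pow. rewrite Rpower_sqrt by (apply norm2_pos; auto).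
  split; rewrite <- sqrt_Rsqr_abs; apply sqrt_le_1_alt; unfold Rsqr, norm2;
  pose proof (Rle_0_sqr t); pose proof (Rle_0_sqr Y); unfold Rsqr in *; lra.
Qed.

Lemma prim_re_abs s Y t : Y <> 0 -> Rabs (prim_re s Y t) <= norm2_pow t Y (- / 2 - s).
Proof.
  intros HY. unfold prim_re. replace (- / 2 - s) with (/ 2 + (-1 - s)) by field.
  rewrite norm2_pow_add.
  rewrite Rabs_mult, Rabs_Ropp.
  rewrite (Rabs_right (norm2_pow t Y (-1 - s))) by (apply Rle_ge, Rlt_le, norm2_pow_pos).
  apply Rmult_le_compat_r. apply Rlt_le, norm2_pow_pos. apply norm2_pow_half; auto.
Qed.

Lemma prim_im_abs s Y t : Y <> 0 -> Rabs (prim_im s Y t) <= norm2_pow t Y (- / 2 - s).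
Proof.
  intros HY. unfold prim_im. replace (- / 2 - s) with (/ 2 + (-1 - s)) by field.
  rewrite norm2_pow_add.
  rewrite Rabs_mult.
  rewrite (Rabs_right (norm2_pow t Y (-1 - s))) by (apply Rle_ge, Rlt_le, norm2_pow_pos).
  apply Rmult_le_compat_r. apply Rlt_le, norm2_pow_pos. apply norm2_pow_half; auto.
Qed.

Lemma filterlim_Rpower_at_right_0 b (g : R -> R) c :
  filterlim g (at_right 0) (locally c) ->
  filterlim (fun s => Rpower b (g s)) (at_right 0) (locally (Rpower b c)).
Proof.
  intros Hg. apply (filterlim_comp _ _ _ g (Rpower b) _ _ _ Hg).
  apply (ex_derive_continuous (K := R_AbsRing) (V := R_NormedModule)).
  unfold Rpower. auto_derive. exact I.
Qed.

Ltac filterlim_at_right_0 :=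
  repeat match goal with
  | |- filterlim (fun _ => _) (at_right 0) _ => apply filterlim_const
  | |- filterlim (fun s => s) (at_right 0) _ => apply filterlim_id_at_right
  | |- filterlim (fun s => _ + _) (at_right 0) _ => apply (filterlim_Rplus (at_right 0))
  | |- filterlim (Rplus _) (at_right 0) _ => apply (filterlim_Rplus (at_right 0))
  | |- filterlim (fun s => _ - _) (at_right 0) _ => apply (filterlim_Rminus (at_right 0))
  | |- filterlim (Rminus _) (at_right 0) _ => apply (filterlim_Rminus (at_right 0))
  | |- filterlim (fun s => _ * _) (at_right 0) _ => apply (filterlim_Rmult (at_right 0))
  | |- filterlim (Rmult _) (at_right 0) _ => apply (filterlim_Rmult (at_right 0))
  | |- filterlim (fun s => _ / _) (at_right 0) _ => apply (filterlim_Rmult (at_right 0))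
  | |- filterlim (fun s => - _) (at_right 0) _ => apply (filterlim_Ropp (at_right 0))
  | |- filterlim Ropp (at_right 0) _ => apply (filterlim_Ropp (at_right 0))
  | |- filterlim (fun s => Rpower _ _) (at_right 0) _ => apply filterlim_Rpower_at_right_0
  end.

Lemma filterlim_prim_re Y t :
  filterlim (fun s => prim_re s Y t) (at_right 0) (locally (prim_re 0 Y t)).
Proof. unfold prim_re, norm2_pow. filterlim_at_right_0. Qed.

Lemma filterlim_der_re Y t :
  filterlim (fun s => der_re s Y t) (at_right 0) (locally (der_re 0 Y t)).
Proof. unfold der_re, norm2_pow. filterlim_at_right_0. Qed.

Lemma filterlim_prim_im Y t :
  filterlim (fun s => prim_im s Y t) (at_right 0) (locally (prim_im 0 Y t)).
Proof. unfold prim_im, norm2_pow. filterlim_at_right_0. Qed.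

Lemma filterlim_der_im Y t :
  filterlim (fun s => der_im s Y t) (at_right 0) (locally (der_im 0 Y t)).
Proof. unfold der_im, norm2_pow. filterlim_at_right_0. Qed.

(** * Decomposition of [sigma_eps] *)

Definition lat_abs_pow s x y a1 a2 D m n :=
  if Z.eq_dec (a1 + D * m) 0 then 0
  else norm2_pow (lat_re x a1 a2 D m n) (lat_im y a1 D m) (-1 - s).

Lemma lat_abs_pow_ge0 s x y a1 a2 D m n : 0 <= lat_abs_pow s x y a1 a2 D m n.
Proof.
  unfold lat_abs_pow. destruct (Z.eq_dec (a1 + D * m) 0); [lra | apply Rlt_le, norm2_pow_pos].
Qed.

Lemma Re_sigma_term s x y a1 a2 D m n : 0 < y -> 0 <= s ->
  Re (sigma_term s (x, y) a1 a2 D m n) =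
  / (1 + s)
    * (lattice_defect prim_re der_re s x y a1 a2 D m n + lattice_diff prim_re s x y a1 a2 D m n)
  - s / (1 + s) * lat_abs_pow s x y a1 a2 D m n.
Proof.
  intros Hy Hs. unfold sigma_term, lattice_defect, lat_abs_pow.
  destruct (Z.eq_dec (a1 + D * m) 0) as [H|H].
  { unfold lattice_diff. destruct (Z.eq_dec (a1 + D * m) 0); [simpl; field; lra | contradiction]. }
  rewrite (Rplus_comm (_ - _) (lattice_diff _ _ _ _ _ _ _ _ _)), Rplus_minus.
  rewrite lat_pt_pair, Cinv_sqr_Cmod_pow by (apply lat_im_neq0; auto). unfold Re; simpl fst.
  set (Y := lat_im y a1 D m). set (t := lat_re x a1 a2 D m n).
  assert (HY := lat_im_neq0 y a1 D m Hy H). assert (Hr := norm2_pos t Y HY).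
  unfold der_re. rewrite (norm2_pow_pred t Y (-1 - s) (-2 - s)) by (auto; ring).
  unfold norm2 in *. field. lra.
Qed.

Lemma Im_sigma_term s x y a1 a2 D m n : 0 < y -> 0 <= s ->
  Im (sigma_term s (x, y) a1 a2 D m n) =
  / (1 + s)
    * (lattice_defect prim_im der_im s x y a1 a2 D m n + lattice_diff prim_im s x y a1 a2 D m n).
Proof.
  intros Hy Hs. unfold sigma_term, lattice_defect.
  destruct (Z.eq_dec (a1 + D * m) 0) as [H|H].
  { unfold lattice_diff. destruct (Z.eq_dec (a1 + D * m) 0); [simpl; field; lra | contradiction]. }
  rewrite (Rplus_comm (_ - _) (lattice_diff _ _ _ _ _ _ _ _ _)), Rplus_minus.
  rewrite lat_pt_pair, Cinv_sqr_Cmod_pow by (apply lat_im_neq0; auto). unfold Im; simpl snd.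
  unfold der_im. field. lra.
Qed.

Lemma Re_sum_n (a : nat -> C) n : Re (sum_n a n) = sum_n (fun i => Re (a i)) n.
Proof.
  induction n.
  - rewrite !sum_O. reflexivity.
  - rewrite !sum_Sn. rewrite <- IHn. reflexivity.
Qed.

Lemma Im_sum_n (a : nat -> C) n : Im (sum_n a n) = sum_n (fun i => Im (a i)) n.
Proof.
  induction n.
  - rewrite !sum_O. reflexivity.
  - rewrite !sum_Sn. rewrite <- IHn. reflexivity.
Qed.

Lemma Re_sigma_partial s z a1 a2 D N :
  Re (sigma_partial s z a1 a2 D N) = zsum2 N (fun m n => Re (sigma_term s z a1 a2 D m n)).
Proof.
  unfold sigma_partial, zsum2. rewrite Re_sum_n.
  rewrite <- (sum_n_centered (fun m => zsum N (fun n => Re (sigma_term s z a1 a2 D m n)))).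
  apply sum_n_ext. intros i. rewrite Re_sum_n.
  rewrite <- (sum_n_centered (fun n => Re (sigma_term s z a1 a2 D (Z.of_nat i - Z.of_nat N) n))).
  reflexivity.
Qed.

Lemma Im_sigma_partial s z a1 a2 D N :
  Im (sigma_partial s z a1 a2 D N) = zsum2 N (fun m n => Im (sigma_term s z a1 a2 D m n)).
Proof.
  unfold sigma_partial, zsum2. rewrite Im_sum_n.
  rewrite <- (sum_n_centered (fun m => zsum N (fun n => Im (sigma_term s z a1 a2 D m n)))).
  apply sum_n_ext. intros i. rewrite Im_sum_n.
  rewrite <- (sum_n_centered (fun n => Im (sigma_term s z a1 a2 D (Z.of_nat i - Z.of_nat N) n))).
  reflexivity.
Qed.

Lemma sigma_term_opp s z a1 a2 D m n :
  sigma_term s z a1 a2 D (- m) (- n) = sigma_term s z a1 a2 (- D) m n.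
Proof.
  unfold sigma_term, lat_pt. replace (a1 + D * - m)%Z with (a1 + - D * m)%Z by ring.
  replace (a2 + D * - n)%Z with (a2 + - D * n)%Z by ring. reflexivity.
Qed.

Lemma sigma_eps_opp s z a1 a2 D : sigma_eps s z a1 a2 D = sigma_eps s z a1 a2 (- D).
Proof.
  unfold sigma_eps. f_equal.
  - f_equal. apply Lim_seq_ext. intros N. rewrite !Re_sigma_partial. rewrite zsum2_reflect.
    apply zsum2_ext. intros. rewrite sigma_term_opp. reflexivity.
  - f_equal. apply Lim_seq_ext. intros N. rewrite !Im_sigma_partial. rewrite zsum2_reflect.
    apply zsum2_ext. intros. rewrite sigma_term_opp. reflexivity.
Qed.

Lemma sigma_eps_abs s z a1 a2 D : sigma_eps s z a1 a2 D = sigma_eps s z a1 a2 (Z.abs D).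
Proof.
  destruct (Z_le_dec 0 D).
  - rewrite Z.abs_eq; auto.
  - rewrite Z.abs_neq by lia. apply sigma_eps_opp.
Qed.

(** * The mass term [s * sum |w|^(-2-2s)] *)

Lemma Rpower_pred_exp u s : 0 < u -> Rpower u (-1 - 2 * s) = Rpower u (- 2 * s) / u.
Proof.
  intros Hu. replace (-1 - 2 * s) with (-1 + - 2 * s) by ring.
  rewrite Rpower_plus, Rpower_m1 by lra. field. lra.
Qed.

Lemma Rpower_sqr_mul y u s : 0 < y -> 0 < u ->
  Rpower (y * u * (y * u)) (- s) = Rpower y (- 2 * s) * Rpower u (- 2 * s).
Proof.
  intros Hy Hu. rewrite Rpower_sqr, Rpower_mult_distr by nra. f_equal. ring.
Qed.

Lemma lat_im_abs y a1 D m : 0 < y -> Rabs (lat_im y a1 D m) = y * Rabs (IZR (a1 + D * m)).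
Proof. intros Hy. unfold lat_im. rewrite Rabs_mult, (Rabs_right y); lra. Qed.

Lemma zsum_lat_abs_pow_row_le s x y a1 a2 D m N : 0 < s -> 0 < y -> (1 <= D)%Z ->
  zsum N (fun n => lat_abs_pow s x y a1 a2 D m n) <=
  PI / IZR D * Rpower y (-1 - 2 * s) * (col_pos s (a1 + D * m) + col_pos s (- (a1 + D * m)))
  + 2 * Rpower y (- 2 * s) / (y * y) * col_inv_sqr (a1 + D * m).
Proof.
  intros Hs Hy HD. assert (HDr : 1 <= IZR D) by (apply IZR_le; lia).
  unfold lat_abs_pow, col_inv_sqr. destruct (Z.eq_dec (a1 + D * m) 0) as [H|H].
  { rewrite zsum0. unfold col_pos. rewrite H. simpl. destruct (Z_lt_dec 0 0); [lia | lra]. }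
  rewrite <- Rpower_Rabs_IZR_split by auto.
  assert (HY := lat_im_neq0 y a1 D m Hy H). assert (EY := lat_im_abs y a1 D m Hy).
  set (Y := lat_im y a1 D m) in *. set (u := Rabs (IZR (a1 + D * m))) in *.
  assert (Hu : 1 <= u) by (apply Rabs_IZR_ge_1; auto).
  apply (Rle_trans _ (zsum N (fun n => Rpower (Y * Y) (- s) * / norm2 (lat_re x a1 a2 D m n) Y))).
  { apply zsum_le. intros n _. rewrite (norm2_pow_pred _ Y (- s) (-1 - s)) by (auto; ring).
    apply Rmult_le_compat_r; [apply Rlt_le, Rinv_0_lt_compat, norm2_pos; auto|].
    apply Rpower_le_nonpos; [split; [apply Rsqr_pos_lt; auto | apply sqr_le_norm2_r] | lra]. }
  rewrite zsum_scal.
  eapply Rle_trans;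
    [apply Rmult_le_compat_l; [apply Rlt_le, Rpower_pos | apply zsum_inv_norm2_row_le; auto]|].
  rewrite <- (Rabs_mul_self Y), EY, Rpower_sqr_mul, !Rpower_pred_exp by lra.
  rewrite <- (Rabs_mul_self (IZR (a1 + D * m))). fold u.
  assert (Hru : Rpower u (- 2 * s) <= 1) by (apply Rpower_le_1; lra).
  assert (Hry := Rpower_pos y (- 2 * s)). assert (Hru0 := Rpower_pos u (- 2 * s)).
  replace (Rpower y (- 2 * s) * Rpower u (- 2 * s) * (PI / (IZR D * (y * u)) + 2 / (y * u * (y * u))))
    with (PI / IZR D * (Rpower y (- 2 * s) / y) * (Rpower u (- 2 * s) / u)
          + 2 * Rpower y (- 2 * s) / (y * y) * (Rpower u (- 2 * s) * / (u * u))) by (field; lra).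
  apply Rplus_le_compat_l, Rmult_le_compat_l; [apply Rlt_le, Rdiv_lt_0_compat; nra|].
  rewrite <- (Rmult_1_l (/ (u * u))) at 2.
  apply Rmult_le_compat_r; [apply Rlt_le, Rinv_0_lt_compat; nra | exact Hru].
Qed.

Definition mass_upper s y d :=
  PI / d * Rpower y (-1 - 2 * s) * (/ d + 2 * s) + 8 * s * Rpower y (- 2 * s) / (y * y).

Lemma zsum2_lat_abs_pow_le s x y a1 a2 D N : 0 < s -> 0 < y -> (1 <= D)%Z ->
  s * zsum2 N (lat_abs_pow s x y a1 a2 D) <= mass_upper s y (IZR D).
Proof.
  intros Hs Hy HD. assert (HDr : 1 <= IZR D) by (apply IZR_le; lia).
  eapply Rle_trans.
  { apply Rmult_le_compat_l; [lra|].
    apply zsum_le. intros m _. apply zsum_lat_abs_pow_row_le; auto. }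
  rewrite zsum_add, !zsum_scal, Rmult_plus_distr_l.
  pose proof (zsum_col_pos_pair_le s a1 D N Hs HD).
  pose proof (zsum_col_inv_sqr_le a1 D N HD). pose proof (zsum_col_inv_sqr_ge0 a1 D N).
  assert (Hp1 := Rpower_pos y (-1 - 2 * s)). assert (Hp2 := Rpower_pos y (- 2 * s)).
  pose proof PI_RGT_0. unfold mass_upper. apply Rplus_le_compat.
  - set (S := zsum N (fun m => col_pos s (a1 + D * m) + col_pos s (- (a1 + D * m)))) in *.
    replace (s * (PI / IZR D * Rpower y (-1 - 2 * s) * S))
      with (PI / IZR D * Rpower y (-1 - 2 * s) * (s * S))
      by ring.
    apply Rmult_le_compat_l;
      [apply Rmult_le_pos; [apply Rlt_le, Rdiv_lt_0_compat|]; lra | assumption].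
  - replace (8 * s * Rpower y (- 2 * s) / (y * y)) with (s * (2 * Rpower y (- 2 * s) / (y * y) * 4))
      by (field; lra).
    apply Rmult_le_compat_l, Rmult_le_compat_l;
      [lra | apply Rlt_le, Rdiv_lt_0_compat; nra | assumption].
Qed.

Definition lat_abs_pow_sum s x y a1 a2 D := lim_real (fun N => zsum2 N (lat_abs_pow s x y a1 a2 D)).

Lemma is_lim_seq_lat_abs_pow_sum s x y a1 a2 D : 0 < s -> 0 < y -> (1 <= D)%Z ->
  is_lim_seq (fun N => zsum2 N (lat_abs_pow s x y a1 a2 D)) (lat_abs_pow_sum s x y a1 a2 D).
Proof.
  intros Hs Hy HD.
  destruct (zsum2_dominated (lat_abs_pow s x y a1 a2 D) (lat_abs_pow s x y a1 a2 D)
              (mass_upper s y (IZR D) / s)) as [H _].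
  - intros m n. rewrite Rabs_right; [lra | apply Rle_ge, lat_abs_pow_ge0].
  - intros N. apply (Rmult_le_reg_l s); auto.
    replace (s * (mass_upper s y (IZR D) / s)) with (mass_upper s y (IZR D)) by (field; lra).
    apply zsum2_lat_abs_pow_le; auto.
  - apply is_lim_seq_lim_real, H.
Qed.

Lemma lat_abs_pow_sum_le s x y a1 a2 D : 0 < s -> 0 < y -> (1 <= D)%Z ->
  s * lat_abs_pow_sum s x y a1 a2 D <= mass_upper s y (IZR D).
Proof.
  intros Hs Hy HD.
  apply (is_lim_seq_le_R (fun N => s * zsum2 N (lat_abs_pow s x y a1 a2 D)) (fun _ => mass_upper s y (IZR D))).
  - intros N. apply zsum2_lat_abs_pow_le; auto.
  - apply (is_lim_seq_scal_l _ s _ (is_lim_seq_lat_abs_pow_sum s x y a1 a2 D Hs Hy HD)).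
  - apply is_lim_seq_const.
Qed.

Lemma norm2_pow_tail_ge s Y t R : 0 < s -> Y <> 0 -> 1 <= R ->
  Rpower (Y * Y) (- s) * (Rpower (1 + R * R) (- s) * / norm2 t Y - tail_inv_sqr (R * Rabs Y) t)
    <= norm2_pow t Y (-1 - s).
Proof.
  intros Hs HY HR. assert (Hr := norm2_pos t Y HY).
  assert (HY2 : 0 < Y * Y) by (apply Rsqr_pos_lt; auto).
  assert (HaY : 0 < Rabs Y) by (apply Rabs_pos_lt; auto).
  assert (HRr : Rpower (1 + R * R) (- s) <= 1) by (apply Rpower_le_1; nra).
  assert (HRp := Rpower_pos (1 + R * R) (- s)).
  assert (HYp := Rpower_pos (Y * Y) (- s)).
  rewrite (norm2_pow_pred t Y (- s) (-1 - s)) by (auto; ring).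
  unfold tail_inv_sqr. destruct (Rlt_dec (R * Rabs Y) (Rabs t)) as [Ht|Ht].
  - assert (Hab : 0 < Rabs t) by nra.
    assert (/ norm2 t Y <= / (t * t)).
    { apply Rinv_le_contravar. rewrite <- Rabs_mul_self. nra. apply sqr_le_norm2_l. }
    assert (Rpower (1 + R * R) (- s) * / norm2 t Y - / (t * t) <= 0).
    { assert (Rpower (1 + R * R) (- s) * / norm2 t Y <= 1 * / norm2 t Y)
        by (apply Rmult_le_compat_r; [apply Rlt_le, Rinv_0_lt_compat|]; lra).
      lra. }
    assert (0 <= norm2_pow t Y (- s) / norm2 t Y)
      by (apply Rlt_le, Rdiv_lt_0_compat; [apply norm2_pow_pos | auto]).
    assert (Rpower (Y * Y) (- s) * (Rpower (1 + R * R) (- s) * / norm2 t Y - / (t * t)) <= 0).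
    { nra. }
    lra.
  - rewrite Rminus_0_r. unfold Rdiv. rewrite <- Rmult_assoc. apply Rmult_le_compat_r.
    apply Rlt_le, Rinv_0_lt_compat; auto.
    rewrite Rmult_comm. rewrite Rpower_mult_distr by nra. unfold norm2_pow. apply Rpower_le_nonpos.
    split. nra.
    unfold norm2. assert (t * t <= R * R * (Y * Y)).
    { rewrite <- (Rabs_mul_self t), <- (Rabs_mul_self Y). assert (0 <= Rabs t) by apply Rabs_pos. 
      replace (R * R * (Rabs Y * Rabs Y)) with ((R * Rabs Y) * (R * Rabs Y)) by ring.
      apply Rmult_le_compat; lra. }
    nra. lra.
Qed.

Lemma zsum_norm2_pow_row_ge s X Y d R Kc N : 0 < s -> Y <> 0 -> 0 < d -> 1 <= R ->
  2 * d <= R * Rabs Y -> 0 < Kc ->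
  Kc <= X + d * IZR (Z.of_nat N) -> X + d * IZR (- Z.of_nat N) <= - Kc ->
  Rpower (Y * Y) (- s)
    * (Rpower (1 + R * R) (- s) * (PI / (d * Rabs Y) - 2 / (d * Kc) - 2 / (Y * Y))
                          - 4 / (d * (R * Rabs Y)))
  <= zsum N (fun n => norm2_pow (X + d * IZR n) Y (-1 - s)).
Proof.
  intros Hs HY Hd HR HT HK HK1 HK2. assert (HaY : 0 < Rabs Y) by (apply Rabs_pos_lt; auto).
  eapply Rle_trans; [|apply zsum_le; intros n _; apply (norm2_pow_tail_ge s Y _ R); auto].
  rewrite zsum_scal, zsum_sub, zsum_scal.
  apply Rmult_le_compat_l; [apply Rlt_le, Rpower_pos|].
  assert (Hrow : PI / (d * Rabs Y) - 2 / (d * Kc) - 2 / (Y * Y)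
                 <= zsum N (fun n => / norm2 (X + d * IZR n) Y)).
  { rewrite <- (Rabs_mul_self Y). unfold norm2.
    rewrite (zsum_ext N _ (fun n => / (Rabs Y * Rabs Y + (X + d * IZR n) * (X + d * IZR n))))
      by (intros; rewrite Rabs_mul_self; f_equal; ring).
    apply zsum_lorentz_ge; auto. }
  assert (Htail : zsum N (fun n => tail_inv_sqr (R * Rabs Y) (X + d * IZR n)) <= 4 / (d * (R * Rabs Y))).
  { eapply Rle_trans; [apply zsum_tail_inv_sqr_le; lra|].
    apply (Rmult_le_reg_r (d * (R * Rabs Y - d) * (R * Rabs Y))); [apply Rmult_lt_0_compat; nra|].
    replace (2 / (d * (R * Rabs Y - d)) * (d * (R * Rabs Y - d) * (R * Rabs Y)))
      with (2 * (R * Rabs Y)) by (field; lra).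
    replace (4 / (d * (R * Rabs Y)) * (d * (R * Rabs Y - d) * (R * Rabs Y)))
      with (4 * (R * Rabs Y - d)) by (field; nra).
    lra. }
  assert (HRr : Rpower (1 + R * R) (- s) <= 1) by (apply Rpower_le_1; nra).
  assert (HRp := Rpower_pos (1 + R * R) (- s)).
  assert (Rpower (1 + R * R) (- s) * (PI / (d * Rabs Y) - 2 / (d * Kc) - 2 / (Y * Y))
          <= Rpower (1 + R * R) (- s) * zsum N (fun n => / norm2 (X + d * IZR n) Y))
    by (apply Rmult_le_compat_l; lra).
  lra.
Qed.

Definition mass_lower_coef s R d := Rpower (1 + R * R) (- s) * PI / d - 4 / (d * R).

Lemma zsum_lat_abs_pow_row_ge s x y a1 a2 D m N R c0 Kc :
  0 < s -> 0 < y -> (1 <= D)%Z -> 1 <= R -> 1 <= c0 -> 2 * IZR D <= R * y * c0 -> 0 < Kc ->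
  Kc <= (x * IZR (a1 + D * m) + IZR a2) + IZR D * IZR (Z.of_nat N) ->
  (x * IZR (a1 + D * m) + IZR a2) + IZR D * IZR (- Z.of_nat N) <= - Kc ->
  mass_lower_coef s R (IZR D) * Rpower y (-1 - 2 * s)
    * (col_ge s c0 (a1 + D * m) + col_ge s c0 (- (a1 + D * m)))
   - Rpower y (- 2 * s) * (2 / (IZR D * Kc) + 2 / (y * y) * col_inv_sqr (a1 + D * m))
  <= zsum N (fun n => lat_abs_pow s x y a1 a2 D m n).
Proof.
  intros Hs Hy HD HR Hc0 HRc HK HK1 HK2. assert (HDr : 1 <= IZR D) by (apply IZR_le; lia).
  assert (Hz : 0 <= zsum N (fun n => lat_abs_pow s x y a1 a2 D m n))
    by (apply zsum_ge0; intros; apply lat_abs_pow_ge0).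
  assert (Hry := Rpower_pos y (- 2 * s)).
  assert (Hneg : 0 <= Rpower y (- 2 * s) * (2 / (IZR D * Kc) + 2 / (y * y) * col_inv_sqr (a1 + D * m))).
  { apply Rmult_le_pos; [lra|]. apply Rplus_le_le_0_compat; [apply Rlt_le, Rdiv_lt_0_compat; nra|].
    apply Rmult_le_pos; [apply Rlt_le, Rdiv_lt_0_compat; nra|].
    pose proof (zsum_col_inv_sqr_ge0 (a1 + D * m) D 0). simpl in H.
    rewrite Z.mul_0_r, Z.add_0_r in H.
    exact H. }
  destruct (Rle_dec c0 (Rabs (IZR (a1 + D * m)))) as [Hcc|Hcc].
  2:{ rewrite col_ge_pair_small by exact Hcc. lra. }
  assert (Hc : (a1 + D * m)%Z <> 0%Z) by (intros Hc; rewrite Hc, Rabs_R0 in Hcc; lra).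
  rewrite col_ge_pair by lra.
  assert (HY := lat_im_neq0 y a1 D m Hy Hc). assert (EY := lat_im_abs y a1 D m Hy).
  set (Y := lat_im y a1 D m) in *. set (u := Rabs (IZR (a1 + D * m))) in *.
  rewrite (zsum_ext N _ (fun n => norm2_pow (x * IZR (a1 + D * m) + IZR a2 + IZR D * IZR n) Y (-1 - s))).
  2:{ intros n _. unfold lat_abs_pow. destruct (Z.eq_dec (a1 + D * m) 0); [contradiction|].
      rewrite lat_re_row. reflexivity. }
  eapply Rle_trans; [|apply (zsum_norm2_pow_row_ge _ _ _ _ R Kc); auto; try lra; rewrite EY; nra].
  rewrite <- (Rabs_mul_self Y), EY, Rpower_sqr_mul, !Rpower_pred_exp by lra.
  unfold col_inv_sqr, mass_lower_coef. destruct (Z.eq_dec (a1 + D * m) 0); [contradiction|].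
  rewrite <- (Rabs_mul_self (IZR (a1 + D * m))). fold u.
  assert (Hu : 0 < u) by lra. pose proof PI_RGT_0.
  assert (Hru : Rpower u (- 2 * s) <= 1) by (apply Rpower_le_1; lra).
  assert (Hru0 := Rpower_pos u (- 2 * s)).
  assert (HRr : Rpower (1 + R * R) (- s) <= 1) by (apply Rpower_le_1; nra).
  assert (HRp := Rpower_pos (1 + R * R) (- s)).
  set (ry := Rpower y (- 2 * s)) in *. set (ru := Rpower u (- 2 * s)) in *.
  set (rR := Rpower (1 + R * R) (- s)) in *.
  replace (ry * ru * (rR * (PI / (IZR D * (y * u)) - 2 / (IZR D * Kc) - 2 / (y * u * (y * u)))
           - 4 / (IZR D * (R * (y * u)))))
    with ((rR * PI / IZR D - 4 / (IZR D * R)) * (ry / y) * (ru / u)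
          - ry * ((ru * rR) * (2 / (IZR D * Kc) + 2 / (y * y) * / (u * u)))) by (field; lra).
  apply Rplus_le_compat_l, Ropp_le_contravar, Rmult_le_compat_l; [lra|].
  rewrite <- (Rmult_1_l (2 / (IZR D * Kc) + 2 / (y * y) * / (u * u))) at 2.
  apply Rmult_le_compat_r; [|nra].
  apply Rplus_le_le_0_compat; [apply Rlt_le, Rdiv_lt_0_compat; nra|].
  apply Rmult_le_pos; [apply Rlt_le, Rdiv_lt_0_compat; nra | apply Rlt_le, Rinv_0_lt_compat; nra].
Qed.

Lemma lat_abs_pow_sum_ge_cols s x y a1 a2 D R c0 M :
  0 < s -> 0 < y -> (1 <= D)%Z -> 1 <= R -> 1 <= c0 -> 2 * IZR D <= R * y * c0 ->
  mass_lower_coef s R (IZR D) * Rpower y (-1 - 2 * s)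
    * zsum M (fun m => col_ge s c0 (a1 + D * m) + col_ge s c0 (- (a1 + D * m)))
  - 8 * Rpower y (- 2 * s) / (y * y)
  <= lat_abs_pow_sum s x y a1 a2 D.
Proof.
  intros Hs Hy HD HR Hc0 HRc. assert (HDr : 1 <= IZR D) by (apply IZR_le; lia).
  apply (is_lim_seq_ge_eventually _ _ _ (is_lim_seq_lat_abs_pow_sum s x y a1 a2 D Hs Hy HD)).
  intros eta Heta.
  set (Ry2 := Rpower y (- 2 * s)). assert (HRy2 : 0 < Ry2) by apply Rpower_pos.
  set (XM := Rabs x * (Rabs (IZR a1) + IZR D * INR M) + Rabs (IZR a2)).
  assert (HX : forall m, (- Z.of_nat M <= m <= Z.of_nat M)%Z ->
            Rabs (x * IZR (a1 + D * m) + IZR a2) <= XM).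
  { intros m Hm. unfold XM. eapply Rle_trans; [apply Rabs_triang|]. rewrite Rabs_mult.
    apply Rplus_le_compat_r, Rmult_le_compat_l; [apply Rabs_pos | apply Rabs_IZR_affine_le; auto]. }
  assert (HXM : 0 <= XM)
    by (specialize (HX 0%Z ltac:(lia)); pose proof (Rabs_pos (x * IZR (a1 + D * 0) + IZR a2)); lra).
  set (Q := Ry2 * (2 * INR M + 1) * 2 / IZR D).
  assert (HQ : 0 <= Q)
    by (unfold Q; pose proof (pos_INR M); apply Rmult_le_pos; [nra | apply Rlt_le, Rinv_0_lt_compat; lra]).
  assert (HQe : 0 <= Q / eta)
    by (apply Rmult_le_pos; [auto | apply Rlt_le, Rinv_0_lt_compat; auto]).
  destruct (INR_unbounded ((XM + 1 + Q / eta) / IZR D + INR M)) as [N0 HN0].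
  exists N0. intros N HN. apply le_INR in HN.
  assert (HMr : 0 <= (XM + 1 + Q / eta) / IZR D)
    by (apply Rmult_le_pos; [lra | apply Rlt_le, Rinv_0_lt_compat; lra]).
  set (Kc := IZR D * INR N - XM).
  assert (HKc1 : XM + 1 + Q / eta <= IZR D * INR N).
  { apply (Rmult_le_reg_r (/ IZR D)); [apply Rinv_0_lt_compat; lra|].
    replace (IZR D * INR N * / IZR D) with (INR N) by (field; lra). pose proof (pos_INR M). lra. }
  assert (HKc : 1 <= Kc) by (unfold Kc; lra).
  assert (HMN : (M <= N)%nat) by (apply INR_le; pose proof (pos_INR M); lra).
  eapply Rle_trans.
  2:{ apply (zsum_mono M N); auto. intros m. apply zsum_ge0. intros; apply lat_abs_pow_ge0. }
  eapply Rle_trans.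
  2:{ apply zsum_le. intros m Hm.
    apply (zsum_lat_abs_pow_row_ge s x y a1 a2 D m N R c0 Kc); auto; try lra.
      - specialize (HX m Hm). apply Rabs_le_between in HX. rewrite <- INR_IZR_INZ. unfold Kc. lra.
      - specialize (HX m Hm). apply Rabs_le_between in HX. rewrite opp_IZR, <- INR_IZR_INZ.
        unfold Kc. lra. }
  rewrite zsum_sub, !zsum_scal, (zsum_add M (fun _ => 2 / (IZR D * Kc))), zsum_const, zsum_scal.
  assert (HW := zsum_col_inv_sqr_le a1 D M HD).
  assert (Hq : Ry2 * ((2 * INR M + 1) * (2 / (IZR D * Kc))) <= eta).
  { replace (Ry2 * ((2 * INR M + 1) * (2 / (IZR D * Kc)))) with (Q / Kc) by (unfold Q; field; lra).
    apply (Rmult_le_reg_r Kc); [lra|]. replace (Q / Kc * Kc) with Q by (field; lra).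
    apply (Rmult_le_reg_r (/ eta)); [apply Rinv_0_lt_compat; lra|].
    replace (eta * Kc * / eta) with Kc by (field; lra). unfold Kc. lra. }
  assert (Ry2 * (2 / (y * y) * zsum M (fun m => col_inv_sqr (a1 + D * m))) <= 8 * Ry2 / (y * y)).
  { replace (8 * Ry2 / (y * y)) with (Ry2 * (2 / (y * y) * 4)) by (field; lra).
    apply Rmult_le_compat_l; [lra|].
    apply Rmult_le_compat_l; [apply Rlt_le, Rdiv_lt_0_compat; nra | auto]. }
  fold Ry2. lra.
Qed.

Definition mass_lower s y d R c0 :=
  mass_lower_coef s R d * Rpower y (-1 - 2 * s) * Rpower (c0 + d) (- 2 * s) / d
  - 8 * s * Rpower y (- 2 * s) / (y * y).

Lemma lat_abs_pow_sum_ge s x y a1 a2 D R c0 :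
  0 < s -> 0 < y -> (1 <= D)%Z -> 1 <= R -> 1 <= c0 -> 2 * IZR D <= R * y * c0 ->
  0 <= mass_lower_coef s R (IZR D) ->
  mass_lower s y (IZR D) R c0 <= s * lat_abs_pow_sum s x y a1 a2 D.
Proof.
  intros Hs Hy HD HR Hc0 HRc HL. assert (HDr : 1 <= IZR D) by (apply IZR_le; lia).
  unfold mass_lower.
  set (Lm := mass_lower_coef s R (IZR D)) in *.
  set (Ry1 := Rpower y (-1 - 2 * s)). assert (HRy1 : 0 < Ry1) by apply Rpower_pos.
  apply Rle_plus_epsilon. intros eta Heta.
  set (e := eta * IZR D / (Lm * Ry1 + 1)).
  assert (He : 0 < e) by (unfold e; apply Rdiv_lt_0_compat; nra).
  destruct (zsum_col_ge_pair_ge s a1 D c0 e Hs HD Hc0 He) as [M HS].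
  assert (Hcols := lat_abs_pow_sum_ge_cols s x y a1 a2 D R c0 M Hs Hy HD HR Hc0 HRc).
  fold Lm Ry1 in Hcols.
  set (S := zsum M (fun m => col_ge s c0 (a1 + D * m) + col_ge s c0 (- (a1 + D * m)))) in *.
  assert (He' : Lm * Ry1 * e / IZR D <= eta).
  { unfold e. replace (Lm * Ry1 * (eta * IZR D / (Lm * Ry1 + 1)) / IZR D)
      with (eta * (Lm * Ry1 / (Lm * Ry1 + 1))) by (field; split; nra).
    rewrite <- (Rmult_1_r eta) at 2. apply Rmult_le_compat_l; [lra|].
    apply (Rmult_le_reg_r (Lm * Ry1 + 1)); [nra|].
    replace (Lm * Ry1 / (Lm * Ry1 + 1) * (Lm * Ry1 + 1)) with (Lm * Ry1) by (field; nra). lra. }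
  assert (Hmain : Lm * Ry1 * ((Rpower (c0 + IZR D) (- 2 * s) - e) / IZR D) <= Lm * Ry1 * (s * S))
    by (apply Rmult_le_compat_l; nra).
  apply (Rmult_le_compat_l s) in Hcols; [|lra].
  replace (Lm * Ry1 * ((Rpower (c0 + IZR D) (- 2 * s) - e) / IZR D))
    with (Lm * Ry1 * Rpower (c0 + IZR D) (- 2 * s) / IZR D - Lm * Ry1 * e / IZR D) in Hmain
    by (field; lra).
  replace (s * (Lm * Ry1 * S - 8 * Rpower y (- 2 * s) / (y * y)))
    with (Lm * Ry1 * (s * S) - 8 * s * Rpower y (- 2 * s) / (y * y)) in Hcols by (field; nra).
  lra.
Qed.

Lemma filterlim_mass_upper y d : 0 < y -> 0 < d ->
  filterlim (fun s => mass_upper s y d) (at_right 0) (locally (PI / (d * d * y))).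
Proof.
  intros Hy Hd.
  replace (PI / (d * d * y)) with (mass_upper 0 y d)
    by (unfold mass_upper; rewrite Rpower_pred_exp, Rmult_0_r, Rpower_O by lra; field; lra).
  unfold mass_upper. filterlim_at_right_0.
Qed.

Lemma filterlim_mass_lower y d R c0 :
  filterlim (fun s => mass_lower s y d R c0) (at_right 0) (locally (mass_lower 0 y d R c0)).
Proof. unfold mass_lower, mass_lower_coef. filterlim_at_right_0. Qed.

Lemma mass_lower_0 y d R c0 : 0 < y -> 0 < d -> 0 < R -> 0 < c0 + d ->
  mass_lower 0 y d R c0 = PI / (d * d * y) - 4 / (d * d * R * y).
Proof.
  intros Hy Hd HR Hc. unfold mass_lower, mass_lower_coef.
  rewrite Rpower_pred_exp, Rmult_0_r, Ropp_0, !Rpower_O by nra. field. lra.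
Qed.

(** The lower bound involves the free parameter [R]: [R -> oo] makes it sharp. *)
Lemma filterlim_lat_abs_pow_sum x y a1 a2 D : 0 < y -> (1 <= D)%Z ->
  filterlim (fun s => s * lat_abs_pow_sum s x y a1 a2 D) (at_right 0)
    (locally (PI / (IZR D * IZR D * y))).
Proof.
  intros Hy HD. assert (HDr : 1 <= IZR D) by (apply IZR_le; lia).
  set (d := IZR D) in *. set (V := PI / (d * d * y)).
  assert (HPI : 2 < PI) by (pose proof PI2_1; lra).
  apply (proj2 (filterlim_locally_Rabs _ _ _)). intros eps Heps.
  set (R := 4 + 12 / (d * d * y * eps)).
  assert (HR : 4 <= R).
  { unfold R.
    assert (0 < 12 / (d * d * y * eps)) by (apply Rdiv_lt_0_compat; [lra | repeat apply Rmult_lt_0_compat; lra]).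
    lra. }
  set (c0 := 1 + 2 * d / (R * y)).
  assert (Hc0 : 1 <= c0)
    by (unfold c0; assert (0 < 2 * d / (R * y)) by (apply Rdiv_lt_0_compat; nra); lra).
  assert (HRc : 2 * d <= R * y * c0).
  { unfold c0. replace (R * y * (1 + 2 * d / (R * y))) with (R * y + 2 * d) by (field; nra). nra. }
  assert (Hup : at_right 0 (fun s => mass_upper s y d < V + eps))
    by (apply (filterlim_at_right_lt _ V); [apply filterlim_mass_upper | ]; lra).
  assert (Hlow : V - eps / 2 < mass_lower 0 y d R c0).
  { rewrite mass_lower_0 by lra. fold V.
    cut (4 / (d * d * R * y) < eps / 2); [lra|].
    apply (Rmult_lt_reg_r (d * d * R * y)); [repeat apply Rmult_lt_0_compat; lra|].
    replace (4 / (d * d * R * y) * (d * d * R * y)) with 4 by (field; nra).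
    unfold R. replace (eps / 2 * (d * d * (4 + 12 / (d * d * y * eps)) * y))
      with (2 * eps * d * d * y + 6) by (field; nra).
    assert (0 < eps * d * d * y) by (repeat apply Rmult_lt_0_compat; lra). lra. }
  assert (Hlow' := filterlim_at_right_gt _ _ _ (filterlim_mass_lower y d R c0) Hlow).
  assert (Hcoef : 0 < mass_lower_coef 0 R d).
  { unfold mass_lower_coef. rewrite Ropp_0, Rpower_O by nra.
    replace (1 * PI / d - 4 / (d * R)) with ((PI - 4 / R) / d) by (field; nra).
    apply Rdiv_lt_0_compat; [|lra].
    assert (4 / R <= 1)
      by (apply (Rmult_le_reg_r R); [lra|]; replace (4 / R * R) with 4 by (field; lra); lra).
    lra. }
  assert (Hcoef_lim : filterlim (fun s => mass_lower_coef s R d) (at_right 0)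
                        (locally (mass_lower_coef 0 R d)))
    by (unfold mass_lower_coef; filterlim_at_right_0).
  assert (Hcoef' := filterlim_at_right_gt _ _ 0 Hcoef_lim Hcoef).
  assert (Hs01 : at_right 0 (fun s => 0 < s < 1))
    by exact (at_right_0_interval _ 1 ltac:(lra) (fun s Hs => Hs)).
  eapply filter_imp; [|apply filter_and; [exact Hup | apply filter_and; [exact Hlow' |
                                            apply filter_and; [exact Hcoef' | exact Hs01]]]].
  intros s [H1 [H2 [H3 H4]]]. unfold d in *.
  assert (Hge := lat_abs_pow_sum_ge s x y a1 a2 D R c0 ltac:(lra) Hy HD ltac:(lra) Hc0 HRc ltac:(lra)).
  assert (Hle := lat_abs_pow_sum_le s x y a1 a2 D ltac:(lra) Hy HD).
  apply Rabs_lt_between. split; lra.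
Qed.

Lemma Re_sigma_eps s x y a1 a2 D : 0 < s < 1 -> 0 < y -> (1 <= D)%Z ->
  fst (sigma_eps s (x, y) a1 a2 D) =
  / (1 + s) * defect_sum prim_re der_re s x y a1 a2 D
    - / (1 + s) * (s * lat_abs_pow_sum s x y a1 a2 D).
Proof.
  intros Hs Hy HD. apply lim_real_unique.
  apply (is_lim_seq_ext (fun N => / (1 + s) * (zsum2 N (lattice_defect prim_re der_re s x y a1 a2 D)
                                              + zsum2 N (lattice_diff prim_re s x y a1 a2 D))
                                 - s / (1 + s) * zsum2 N (lat_abs_pow s x y a1 a2 D))).
  { intros N. rewrite Re_sigma_partial, <- zsum2_add, <- !zsum2_scal, <- zsum2_sub.
    apply zsum2_ext. intros. symmetry. apply Re_sigma_term; lra. }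
  set (A := defect_sum prim_re der_re s x y a1 a2 D). set (B := lat_abs_pow_sum s x y a1 a2 D).
  replace (/ (1 + s) * A - / (1 + s) * (s * B)) with (/ (1 + s) * (A + 0) - s / (1 + s) * B)
    by (field; lra).
  apply is_lim_seq_minus'.
  - apply (is_lim_seq_scal_l _ _ (A + 0)), is_lim_seq_plus'.
    + apply (is_lim_seq_defect_sum _ _ der2_re);
        auto using is_derive_prim_re, is_derive_der_re, der2_re_bound; lra.
    + apply is_lim_seq_lattice_diff_0; auto using prim_re_abs; lra.
  - apply (is_lim_seq_scal_l _ _ B), is_lim_seq_lat_abs_pow_sum; auto; lra.
Qed.

Lemma Im_sigma_eps s x y a1 a2 D : 0 < s < 1 -> 0 < y -> (1 <= D)%Z ->
  snd (sigma_eps s (x, y) a1 a2 D) = / (1 + s) * defect_sum prim_im der_im s x y a1 a2 D.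
Proof.
  intros Hs Hy HD. apply lim_real_unique.
  apply (is_lim_seq_ext (fun N => / (1 + s) * (zsum2 N (lattice_defect prim_im der_im s x y a1 a2 D)
                                              + zsum2 N (lattice_diff prim_im s x y a1 a2 D)))).
  { intros N. rewrite Im_sigma_partial, <- zsum2_add, <- zsum2_scal.
    apply zsum2_ext. intros. symmetry. apply Im_sigma_term; lra. }
  rewrite <- (Rplus_0_r (defect_sum prim_im der_im s x y a1 a2 D)).
  apply (is_lim_seq_scal_l _ _ (defect_sum prim_im der_im s x y a1 a2 D + 0)), is_lim_seq_plus'.
  - apply (is_lim_seq_defect_sum _ _ der2_im);
      auto using is_derive_prim_im, is_derive_der_im, der2_im_bound; lra.
  - apply is_lim_seq_lattice_diff_0; auto using prim_im_abs; lra.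
Qed.

(** The inner limit, for [D > 0] and [z = x + i y]. *)
Definition sigma_limit (x y : R) (a1 a2 D : Z) : C :=
  (defect_sum prim_re der_re 0 x y a1 a2 D - PI / (IZR D * IZR D * y),
   defect_sum prim_im der_im 0 x y a1 a2 D).

Lemma filterlim_sigma_eps x y a1 a2 D : 0 < y -> (1 <= D)%Z ->
  filterlim (fun eps => sigma_eps eps (x, y) a1 a2 D) (at_right 0)
    (locally (sigma_limit x y a1 a2 D)).
Proof.
  intros Hy HD. apply (filterlim_pair (at_right 0)).
  - apply (filterlim_ext_loc (fun s => / (1 + s) * defect_sum prim_re der_re s x y a1 a2 D
                                      - / (1 + s) * (s * lat_abs_pow_sum s x y a1 a2 D))).
    { apply (at_right_0_interval _ 1); [lra|]. intros s Hs. symmetry. apply Re_sigma_eps; auto. }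
    rewrite <- (Rmult_1_l (defect_sum _ _ 0 _ _ _ _ _)), <- (Rmult_1_l (PI / _)).
    apply (filterlim_Rminus (at_right 0)); apply (filterlim_Rmult (at_right 0));
      try apply filterlim_inv_1_plus.
    + apply (filterlim_defect_sum _ _ der2_re);
        auto using is_derive_prim_re, is_derive_der_re, der2_re_bound, filterlim_prim_re, filterlim_der_re.
    + apply filterlim_lat_abs_pow_sum; auto.
  - apply (filterlim_ext_loc (fun s => / (1 + s) * defect_sum prim_im der_im s x y a1 a2 D)).
    { apply (at_right_0_interval _ 1); [lra|]. intros s Hs. symmetry. apply Im_sigma_eps; auto. }
    rewrite <- (Rmult_1_l (defect_sum _ _ 0 _ _ _ _ _)).
    apply (filterlim_Rmult (at_right 0)); [apply filterlim_inv_1_plus|].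
    apply (filterlim_defect_sum _ _ der2_im);
      auto using is_derive_prim_im, is_derive_der_im, der2_im_bound, filterlim_prim_im, filterlim_der_im.
Qed.

Global Instance Im_to_infty_filter : Filter Im_to_infty.
Proof.
  constructor.
  - exists 0. auto.
  - intros P Q [M1 H1] [M2 H2]. exists (Rmax M1 M2). intros z Hz. split.
    + apply H1. eapply Rle_lt_trans; [apply Rmax_l | exact Hz].
    + apply H2. eapply Rle_lt_trans; [apply Rmax_r | exact Hz].
  - intros P Q H [M HM]. exists M. intros z Hz. apply H, HM, Hz.
Qed.

Lemma filterlim_Im_to_infty_0 (f : C -> R) K :
  (forall z, 1 <= Im z -> Rabs (f z) <= K / Im z) -> filterlim f Im_to_infty (locally 0).
Proof.
  intros Hf. apply (proj2 (filterlim_locally_Rabs _ _ _)). intros eps Heps.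
  exists (1 + Rabs K / eps). intros z Hz.
  assert (HK : 0 <= Rabs K / eps)
    by (apply Rmult_le_pos; [apply Rabs_pos | apply Rlt_le, Rinv_0_lt_compat; lra]).
  rewrite Rminus_0_r. eapply Rle_lt_trans; [apply Hf; lra|].
  apply (Rmult_lt_reg_r (Im z)); [lra|]. replace (K / Im z * Im z) with K by (field; lra).
  assert (H : Rabs K / eps < Im z) by lra.
  apply (Rmult_lt_compat_l eps) in H; [|lra].
  replace (eps * (Rabs K / eps)) with (Rabs K) in H by (field; lra).
  pose proof (Rle_abs K). lra.
Qed.

Lemma sigma_limit_le a1 a2 D : (1 <= D)%Z -> exists K, forall x y, 1 <= y ->
  Rabs (fst (sigma_limit x y a1 a2 D)) <= K / y /\ Rabs (snd (sigma_limit x y a1 a2 D)) <= K / y.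
Proof.
  intros HD. assert (HDr : 1 <= IZR D) by (apply IZR_le; lia).
  destruct (defect_dom_total_le (IZR D) HDr) as [K [HK HKy]].
  exists (K + PI). intros x y Hy. pose proof PI_RGT_0. unfold sigma_limit; simpl fst; simpl snd.
  assert (Hre := defect_sum_le _ _ der2_re is_derive_prim_re is_derive_der_re der2_re_bound
                  x y a1 a2 D ltac:(lra) HD).
  assert (Him := defect_sum_le _ _ der2_im is_derive_prim_im is_derive_der_im der2_im_bound
                  x y a1 a2 D ltac:(lra) HD).
  specialize (HKy y Hy).
  assert (HPy : 0 <= PI / (IZR D * IZR D * y) <= PI / y).
  { assert (HDD : 1 <= IZR D * IZR D) by nra.
    split; [apply Rlt_le, Rdiv_lt_0_compat; nra|].
    apply Rmult_le_compat_l; [lra|]. apply Rinv_le_contravar; nra. }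
  assert (PI / y >= 0) by (apply Rle_ge, Rlt_le, Rdiv_lt_0_compat; lra).
  replace ((K + PI) / y) with (K / y + PI / y) by (field; lra).
  split.
  - eapply Rle_trans; [apply Rabs_triang|]. rewrite Rabs_Ropp, (Rabs_right (PI / _)) by lra. lra.
  - lra.
Qed.

Theorem lemma1p7 (a1 a2 D : Z) (hD : D <> 0%Z) :
  exists L : C -> C,
    (forall z : C, 0 < Im z ->
       filterlim (fun eps => sigma_eps eps z a1 a2 D) (at_right 0) (locally (L z))) /\
    filterlim L Im_to_infty (locally (RtoC 0)).
Proof.
  assert (HD : (1 <= Z.abs D)%Z) by lia.
  exists (fun z => sigma_limit (Re z) (Im z) a1 a2 (Z.abs D)). split.
  - intros [x y] Hy.
    eapply filterlim_ext; [intros s; symmetry; apply sigma_eps_abs|].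
    apply filterlim_sigma_eps; auto.
  - destruct (sigma_limit_le a1 a2 (Z.abs D) HD) as [K HK].
    apply (filterlim_pair Im_to_infty);
      apply (filterlim_Im_to_infty_0 _ K); intros z Hz; apply HK, Hz.
Qed.
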